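(* Let $q\ge 2$ be an integer and $s\in(0,2)$, and let $P(x,t)=|\Psi(x,t)|^2$ be the probability density of the Weierstrass-like wave function $\Psi$ defined in the context. Then for every fixed $t\in\mathbb R$ the graph of $x\mapsto P(x,t)$ on $[0,\pi]$ has box-counting dimension $D_x=\max\{s,1\}$. In particular this dimension is the same at $t=0$ and at every later time.
   Context: For an integer $q\ge2$ and $s\in(0,2)$ define, for $x\in[0,\pi]$ and $t\in\mathbb R$, $$\Psi(x,t)=N\sum_{n=0}^{\infty} q^{n(s-2)}\sin(q^n x)\,e^{-i q^{2n} t},\qquad N=\sqrt{\tfrac{2}{\pi}\big(1-q^{2(s-2)}\big)},$$ a uniformly convergent series. Let $P(x,t)=|\Psi(x,t)|^2$. For a bounded set $A\subset\mathbb R^d$ let $N(\delta)$ be the number of cubes $[m_1\delta,(m_1+1)\delta]\times\dots\times[m_d\delta,(m_d+1)\delta]$, $m_i\in\mathbb Z$, meeting $A$. The upper and lower box-counting dimensions are $\limsup_{\delta\to0}$ and $\liminf_{\delta\to0}$ of $\ln N(\delta)/\ln(1/\delta)$. The box-counting dimension $\dim_B A$ exists when these two coincide, and is then their common value. The graph of a function $f$ on a set $U$ is $\{(u,f(u)):u\in U\}$. *)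

From Stdlib Require Import Reals ZArith List.
From Coquelicot Require Import Coquelicot.
Open Scope R_scope.

Definition coef (q : nat) (s : R) (n : nat) : R :=
  Rpower (INR q) (INR n * (s - 2)).

Definition Nconst (q : nat) (s : R) : R :=
  sqrt (2 / PI * (1 - Rpower (INR q) (2 * (s - 2)))).

(* Psi(x,t) = N sum q^{n(s-2)} sin(q^n x) e^{-i q^{2n} t}; real and imaginary parts. *)
Definition RePsi (q : nat) (s x t : R) : R :=
  Nconst q s * Series (fun n => coef q s n * sin (INR q ^ n * x) * cos (INR q ^ (2 * n) * t)).

Definition ImPsi (q : nat) (s x t : R) : R :=
  - (Nconst q s * Series (fun n => coef q s n * sin (INR q ^ n * x) * sin (INR q ^ (2 * n) * t))).

Definition Pdens (q : nat) (s x t : R) : R := RePsi q s x t ^ 2 + ImPsi q s x t ^ 2.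

Definition graphP (q : nat) (s t : R) (p : R * R) : Prop :=
  0 <= fst p <= PI /\ snd p = Pdens q s (fst p) t.

Definition box_meets (A : R * R -> Prop) (d : R) (m : Z * Z) : Prop :=
  exists p, A p /\
    IZR (fst m) * d <= fst p <= (IZR (fst m) + 1) * d /\
    IZR (snd m) * d <= snd p <= (IZR (snd m) + 1) * d.

Definition has_card {T : Type} (S : T -> Prop) (n : nat) : Prop :=
  exists l : list T, NoDup l /\ length l = n /\ (forall z, In z l <-> S z).

(* N(d) is well defined (finitely many meeting squares), and
   ln N(d) / ln(1/d) -> D as d -> 0+; i.e. upper and lower box dimensions
   both equal D, so dim_B A exists and equals D. *)
Definition box_dim_is (A : R * R -> Prop) (D : R) : Prop :=
  (forall d, 0 < d -> exists n, has_card (box_meets A d) n) /\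
  (forall eps, 0 < eps -> exists d0, 0 < d0 /\
     forall d n, 0 < d < d0 -> has_card (box_meets A d) n ->
       Rabs (ln (INR n) / ln (1 / d) - D) < eps).

(* Write [P = N^2 (ReS^2 + ImS^2)] with lacunary series [ReS], [ImS] of ratio
   [r = q^(s - 2) < 1].

   Upper bound: the [n]-th mode [sin (q^n x)] is [th]-Hölder with constant
   [q^(n th)], so for [th < 2 - s] the weighted sum converges and [P] is
   [th]-Hölder for every [th < min 1 (2 - s)]; such a graph meets
   [O (d^(th - 2))] boxes of size [d].

   Lower bound: a continuous graph meets at least [1 / d] boxes, which settles
   [s <= 1]. For [s > 1], take [q^k ~ PI / d] and the frequency
   [J = q^k + q^n0] with [n0] in [{0, 1}]. By the arithmetic of sums of powers
   of [q], exactly one pair of modes of [P] resonates with [cos (J x)], so the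
   Fourier coefficient of [P] at [J] is of size [r^k ~ d^(2 - s)], up to a
   time-dependent phase that is bounded below for [n0 = 0] or [n0 = 1]. Shifting
   by the half period [PI / J] bounds that coefficient by the [L^1] norm of
   [P (x + PI / J) - P x], which is at most [2 d^2 N(d) + O(d)]. Hence
   [N(d) >~ d^(-s)]. *)

From Stdlib Require Import Reals ZArith List.
From Coquelicot Require Import Coquelicot.
From Stdlib Require Import Lia Lra ClassicalEpsilon.
Open Scope R_scope.

(** * Sums of two powers of [q] *)

Section PowersOfBase.
Local Open Scope nat_scope.
Variable q : nat.
Hypothesis q_ge2 : 2 <= q.

Lemma divide_pow_S m : Nat.divide q (q ^ S m).
Proof. exists (q ^ m). simpl. lia. Qed.

Lemma not_divide_1 : ~ Nat.divide q 1.
Proof. intros D. apply Nat.divide_1_r in D. lia. Qed.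

Lemma pow_injective m k : q ^ m = q ^ k -> m = k.
Proof. intros E. apply Nat.pow_inj_r with q; lia. Qed.

Lemma pow_ge4 k : 2 <= k -> 4 <= q ^ k.
Proof.
  intros Hk. apply Nat.le_trans with (2 ^ k).
  - change 4 with (2 ^ 2). apply Nat.pow_le_mono_r; lia.
  - apply Nat.pow_le_mono_l. lia.
Qed.

Lemma pow_add_pow_eq_pow_add1 k m n : 2 <= k ->
  q ^ m + q ^ n = q ^ k + 1 -> (m = k /\ n = 0) \/ (m = 0 /\ n = k).
Proof.
  intros Hk E. pose proof (pow_ge4 k Hk).
  destruct m as [|m]; destruct n as [|n]; rewrite ?Nat.pow_0_r in E.
  - lia.
  - right. split; [easy|]. apply pow_injective. lia.
  - left. split; [|easy]. apply pow_injective. lia.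
  - exfalso. apply not_divide_1.
    apply (Nat.divide_add_cancel_r _ (q ^ k)); [destruct k; [lia|apply divide_pow_S]|].
    rewrite <- E. apply Nat.divide_add_r; apply divide_pow_S.
Qed.

Lemma pow_ne_pow_add_pow_add1 k m n : 2 <= k -> q ^ m <> q ^ n + q ^ k + 1.
Proof.
  intros Hk E. pose proof (pow_ge4 k Hk).
  destruct m as [|m]; [simpl in E; lia|].
  destruct k as [|k]; [lia|].
  destruct n as [|n].
  - (* q divides q^k + 2, so q = 2, and then 4 divides 2^k + 2 with k >= 2: impossible *)
    rewrite Nat.pow_0_r in E.
    assert (Hq2 : q = 2).
    { assert (D : Nat.divide q 2).
      { apply (Nat.divide_add_cancel_r _ (q ^ S k)); [apply divide_pow_S|].
        replace (q ^ S k + 2) with (q ^ S m) by lia. apply divide_pow_S. }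
      apply Nat.divide_pos_le in D; lia. }
    subst q. destruct m as [|m]; [change (2 ^ 1) with 2 in E; lia|].
    destruct k as [|k]; [lia|].
    assert (D : Nat.divide 4 2); [|apply Nat.divide_pos_le in D; lia].
    apply (Nat.divide_add_cancel_r _ (2 ^ S (S k))).
    + exists (2 ^ k). simpl. lia.
    + replace (2 ^ S (S k) + 2) with (2 ^ S (S m)) by lia. exists (2 ^ m). simpl. lia.
  - apply not_divide_1.
    apply (Nat.divide_add_cancel_r _ (q ^ S n + q ^ S k)).
    + apply Nat.divide_add_r; apply divide_pow_S.
    + rewrite <- E. apply divide_pow_S.
Qed.

Lemma pow_add_pow_eq_pow_add_q k m n : 3 <= k ->
  q ^ m + q ^ n = q ^ k + q -> (m = k /\ n = 1) \/ (m = 1 /\ n = k).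
Proof.
  intros Hk E.
  assert (Hdiv : forall a, Nat.divide q (q ^ k + q - q ^ S a)).
  { intros a. apply Nat.divide_sub_r; [apply Nat.divide_add_r; [destruct k; [lia|apply divide_pow_S]|]|];
      [apply Nat.divide_refl|apply divide_pow_S]. }
  destruct m as [|m]; [exfalso|destruct n as [|n]; [exfalso|]].
  - destruct n as [|n]; [pose proof (pow_ge4 k ltac:(lia)); simpl in E; lia|].
    apply not_divide_1. specialize (Hdiv n). rewrite Nat.pow_0_r in E.
    replace (q ^ k + q - q ^ S n) with 1 in Hdiv by lia. exact Hdiv.
  - apply not_divide_1. specialize (Hdiv m). rewrite Nat.pow_0_r in E.
    replace (q ^ k + q - q ^ S m) with 1 in Hdiv by lia. exact Hdiv.
  - destruct k as [|k]; [lia|]. simpl in E.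
    assert (E' : q ^ m + q ^ n = q ^ k + 1) by (apply (Nat.mul_cancel_l _ _ q); lia).
    destruct (pow_add_pow_eq_pow_add1 k m n ltac:(lia) E') as [[-> ->]|[-> ->]]; auto.
Qed.

Lemma pow_ne_pow_add_pow_add_q k m n : 3 <= k -> q ^ m <> q ^ n + q ^ k + q.
Proof.
  intros Hk E.
  destruct m as [|m]; [pose proof (pow_ge4 k ltac:(lia)); simpl in E; lia|].
  destruct n as [|n].
  - apply not_divide_1. apply (Nat.divide_add_cancel_r _ (q ^ k + q)).
    + apply Nat.divide_add_r; [destruct k; [lia|apply divide_pow_S]|apply Nat.divide_refl].
    + replace (q ^ k + q + 1) with (q ^ S m) by (rewrite Nat.pow_0_r in E; lia). apply divide_pow_S.
  - destruct k as [|k]; [lia|]. simpl in E.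
    apply (pow_ne_pow_add_pow_add1 k m n ltac:(lia)).
    apply (Nat.mul_cancel_l _ _ q); lia.
Qed.

(* For [J = q^k + q^n0] with [admissible k n0], [q^m + q^n = J] forces
   [{m, n} = {k, n0}] and [q^m = q^n + J] is impossible: exactly one pair of
   modes of [|Psi|^2] resonates with [cos (J x)]. *)
Definition admissible (k n0 : nat) := (n0 = 0 /\ 2 <= k) \/ (n0 = 1 /\ 3 <= k).

Lemma pow_ne_pow_add_admissible k n0 m n :
  admissible k n0 -> q ^ m <> q ^ n + (q ^ k + q ^ n0).
Proof.
  intros [[-> Hk]|[-> Hk]]; rewrite Nat.add_assoc.
  - rewrite Nat.pow_0_r. apply pow_ne_pow_add_pow_add1; auto.
  - rewrite Nat.pow_1_r. apply pow_ne_pow_add_pow_add_q; auto.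
Qed.

Lemma pow_add_pow_eq_admissible k n0 m n : admissible k n0 ->
  q ^ m + q ^ n = q ^ k + q ^ n0 -> (m = k /\ n = n0) \/ (m = n0 /\ n = k).
Proof.
  intros [[-> Hk]|[-> Hk]].
  - rewrite Nat.pow_0_r. apply pow_add_pow_eq_pow_add1; auto.
  - rewrite Nat.pow_1_r. apply pow_add_pow_eq_pow_add_q; auto.
Qed.

End PowersOfBase.

Lemma continuity_shift f h : continuity f -> continuity (fun x => f (x + h)).
Proof.
  intros Hc. apply continuity_comp with (f1 := fun x => x + h) (f2 := f); auto.
  apply continuity_plus; [apply derivable_continuous, derivable_id|apply continuity_const; intros ? ?; auto].
Qed.

Lemma continuity_abs_increment f h : continuity f -> continuity (fun x => Rabs (f (x + h) - f x)).
Proof.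
  intros Hc. apply continuity_comp with (f1 := fun x => f (x + h) - f x) (f2 := Rabs).
  - apply continuity_minus; [apply continuity_shift|]; auto.
  - apply Rcontinuity_abs.
Qed.

Lemma ex_RInt_continuity g a b : continuity g -> ex_RInt g a b.
Proof.
  intros Hc. apply (@ex_RInt_continuous R_CompleteNormedModule).
  intros z _. apply continuity_pt_filterlim. apply Hc.
Qed.

Lemma RInt_le_const g a b K : a <= b -> continuity g ->
  (forall x, a <= x <= b -> g x <= K) -> RInt g a b <= (b - a) * K.
Proof.
  intros Hab Hc HK.
  assert (H : RInt g a b <= RInt (fun _ => K) a b).
  { apply RInt_le; auto; [apply ex_RInt_continuity; auto|apply ex_RInt_const|].
    intros x Hx. apply HK. lra. }
  rewrite RInt_const in H. exact H.
Qed.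

Lemma continuity_cos_mul J : continuity (fun x => cos (J * x)).
Proof.
  apply continuity_comp with (f1 := fun x => J * x) (f2 := cos); [|apply continuity_cos].
  apply continuity_mult; [apply continuity_const; intros ? ?; auto|apply derivable_continuous, derivable_id].
Qed.

Lemma RInt_Chasles_continuity f a b c : continuity f -> RInt f a b + RInt f b c = RInt f a c.
Proof. intros Hf. apply (RInt_Chasles f a b c); apply ex_RInt_continuity; auto. Qed.

Lemma Rabs_RInt_le_const f a b M : a <= b -> continuity f ->
  (forall x, a <= x <= b -> Rabs (f x) <= M) -> Rabs (RInt f a b) <= (b - a) * M.
Proof. intros Hab Hf H. apply abs_RInt_le_const; auto. apply ex_RInt_continuity; auto. Qed.

Lemma RInt_shift f h a b : continuity f -> RInt (fun y => f (y + h)) a b = RInt f (a + h) (b + h).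
Proof.
  intros Hf. replace (a + h) with (1 * a + h) by ring. replace (b + h) with (1 * b + h) by ring.
  rewrite <- (RInt_comp_lin f 1 h a b) by (apply ex_RInt_continuity; auto).
  apply RInt_ext. intros x _. unfold scal; simpl; unfold mult; simpl. rewrite !Rmult_1_l. auto.
Qed.

(** * Counting boxes along a graph over [[0, PI]] *)

Definition graph_0pi (f : R -> R) : R * R -> Prop :=
  fun p => 0 <= fst p <= PI /\ snd p = f (fst p).

Definition oscillation_le (f : R -> R) (a b o : R) : Prop :=
  forall x y, a <= x <= b -> a <= y <= b -> Rabs (f x - f y) <= o.

Lemma Int_part_bounds y : IZR (Int_part y) <= y < IZR (Int_part y) + 1.
Proof. destruct (base_Int_part y). lra. Qed.

Lemma le_Int_part z y : IZR z <= y -> (z <= Int_part y)%Z.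
Proof.
  intros H. destruct (Int_part_bounds y) as [_ H2].
  destruct (Z_le_gt_dec z (Int_part y)) as [h|h]; auto.
  assert (IZR (Int_part y) + 1 <= IZR z) by (rewrite <- plus_IZR; apply IZR_le; lia).
  lra.
Qed.

Lemma Int_part_div_mul y d : 0 < d ->
  IZR (Int_part (y / d)) * d <= y < (IZR (Int_part (y / d)) + 1) * d.
Proof.
  intros Hd. destruct (Int_part_bounds (y / d)) as [H1 H2].
  replace y with (y / d * d) at 2 3 by (field; lra).
  split; [apply Rmult_le_compat_r|apply Rmult_lt_compat_r]; lra.
Qed.

Lemma box_meets_between f d (m : nat) (r : Z) x1 x2 : continuity f -> 0 < d -> INR m * d + d <= PI ->
  INR m * d <= x1 <= INR m * d + d -> INR m * d <= x2 <= INR m * d + d ->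
  f x1 <= f x2 -> IZR r * d <= f x2 -> f x1 < (IZR r + 1) * d ->
  box_meets (graph_0pi f) d (Z.of_nat m, r).
Proof.
  intros Hc Hd Hm Hx1 Hx2 H12 Hr1 Hr2.
  assert (Hm0 : 0 <= INR m * d) by (apply Rmult_le_pos; [apply pos_INR|lra]).
  set (y := Rmax (f x1) (IZR r * d)).
  assert (Hy : f x1 <= y <= f x2) by (unfold y; split; [apply Rmax_l|apply Rmax_lub; lra]).
  destruct (IVT_gen f x1 x2 y Hc) as [x [Hx Hfx]]; [rewrite Rmin_left, Rmax_right by lra; exact Hy|].
  exists (x, y). simpl. rewrite <- INR_IZR_INZ.
  assert (Hcol : INR m * d <= x <= INR m * d + d).
  { split.
    - apply Rle_trans with (Rmin x1 x2); [apply Rmin_glb; lra|lra].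
    - apply Rle_trans with (Rmax x1 x2); [lra|apply Rmax_lub; lra]. }
  assert (IZR r * d <= y <= (IZR r + 1) * d) by (unfold y; split; [apply Rmax_r|apply Rmax_lub; lra]).
  unfold graph_0pi. simpl. repeat split; lra.
Qed.

Lemma column_boxes f d (m : nat) : continuity f -> 0 < d -> INR m * d + d <= PI ->
  exists o, 0 <= o /\ oscillation_le f (INR m * d) (INR m * d + d) o /\
  exists l, NoDup l /\ (forall z, In z l -> fst z = Z.of_nat m /\ box_meets (graph_0pi f) d z)
    /\ (1 <= length l)%nat /\ o <= INR (length l) * d.
Proof.
  intros Hc Hd Hm.
  assert (Hab : INR m * d <= INR m * d + d) by lra.
  assert (Hcp : forall c, INR m * d <= c <= INR m * d + d -> continuity_pt f c) by (intros; apply Hc).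
  destruct (continuity_ab_min f _ _ Hab Hcp) as [xm [Hmin Hxm]].
  destruct (continuity_ab_maj f _ _ Hab Hcp) as [xM [Hmax HxM]].
  assert (Hmm : f xm <= f xM) by (apply Hmax; auto).
  exists (f xM - f xm). split; [lra|]. split.
  { intros x y Hx Hy. pose proof (Hmin x Hx). pose proof (Hmax x Hx).
    pose proof (Hmin y Hy). pose proof (Hmax y Hy). apply Rabs_le. lra. }
  set (lo := Int_part (f xm / d)). set (hi := Int_part (f xM / d)).
  destruct (Int_part_div_mul (f xm) d Hd) as [L1 L2]. fold lo in L1, L2.
  destruct (Int_part_div_mul (f xM) d Hd) as [U1 U2]. fold hi in U1, U2.
  assert (Hlh : (lo <= hi)%Z).
  { apply le_Int_part. apply Rmult_le_reg_r with d; [lra|].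
    unfold Rdiv. rewrite Rmult_assoc, Rinv_l by lra. lra. }
  exists (map (fun i => (Z.of_nat m, (lo + Z.of_nat i)%Z)) (seq 0 (Z.to_nat (hi - lo) + 1))).
  split; [|split; [|split]].
  - apply NoDup_map_NoDup_ForallPairs; [|apply seq_NoDup].
    intros x y _ _ H. injection H. lia.
  - intros z Hz. apply in_map_iff in Hz as [i [<- Hi]]. split; [reflexivity|].
    apply in_seq in Hi.
    apply (box_meets_between f d m _ xm xM); auto.
    + apply Rle_trans with (IZR hi * d); [|exact U1].
      apply Rmult_le_compat_r; [lra|]. apply IZR_le. lia.
    + apply Rlt_le_trans with ((IZR lo + 1) * d); [exact L2|].
      apply Rmult_le_compat_r; [lra|]. rewrite plus_IZR. pose proof (IZR_le 0 _ (Nat2Z.is_nonneg i)). lra.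
  - rewrite length_map, length_seq. lia.
  - rewrite length_map, length_seq, plus_INR, INR_IZR_INZ, Z2Nat.id by lia.
    rewrite minus_IZR. simpl. lra.
Qed.

Lemma RInt_abs_increment_column f a d h o o' : continuity f -> 0 < h <= d ->
  oscillation_le f a (a + d) o -> oscillation_le f (a + d) (a + d + d) o' ->
  RInt (fun x => Rabs (f (x + h) - f x)) a (a + d) <= d * (o + o').
Proof.
  intros Hc Hh Hosc Hosc'.
  eapply Rle_trans; [apply RInt_le_const with (K := o + o');
    [lra|apply continuity_abs_increment; auto|]|right; ring].
  assert (Ho : 0 <= o) by (specialize (Hosc a a); rewrite Rminus_diag, Rabs_R0 in Hosc; apply Hosc; lra).
  assert (Ho' : 0 <= o')
    by (specialize (Hosc' (a + d) (a + d)); rewrite Rminus_diag, Rabs_R0 in Hosc'; apply Hosc'; lra).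
  intros x Hx. destruct (Rle_dec (x + h) (a + d)) as [Hxc|Hxc].
  - rewrite Rabs_minus_sym. assert (Rabs (f x - f (x + h)) <= o) by (apply Hosc; lra). lra.
  - replace (f (x + h) - f x) with ((f (x + h) - f (a + d)) + (f (a + d) - f x)) by ring.
    eapply Rle_trans; [apply Rabs_triang|].
    assert (Rabs (f (x + h) - f (a + d)) <= o') by (apply Hosc'; lra).
    assert (Rabs (f (a + d) - f x) <= o) by (apply Hosc; lra). lra.
Qed.

(* [d * o] (with [o] the oscillation on the last column) pays for the increments
   that cross into the next column. *)
Lemma columns_boxes f d h (M : nat) : continuity f -> 0 < d -> 0 < h <= d -> INR M * d + d <= PI ->
  exists l, NoDup l /\ (forall z, In z l -> (0 <= fst z <= Z.of_nat M)%Z /\ box_meets (graph_0pi f) d z)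
  /\ (M + 1 <= length l)%nat /\
  exists o, 0 <= o /\ oscillation_le f (INR M * d) (INR M * d + d) o /\
    RInt (fun x => Rabs (f (x + h) - f x)) 0 (INR M * d) + d * o <= 2 * d * d * INR (length l).
Proof.
  intros Hc Hd Hh. induction M as [|M IH]; intros HM.
  - destruct (column_boxes f d 0 Hc Hd HM) as [o [Ho [Hosc [l [Hl [Hlz [Hl1 Hlo]]]]]]].
    exists l. split; [exact Hl|]. split.
    { intros z Hz. destruct (Hlz z Hz) as [-> B]. split; [lia|exact B]. }
    split; [lia|]. exists o. split; [exact Ho|]. split; [exact Hosc|].
    simpl INR in *. rewrite Rmult_0_l, RInt_point. change (zero : R) with 0.
    assert (0 <= INR (length l)) by apply pos_INR. nra.
  - rewrite S_INR in HM.
    destruct (IH ltac:(nra)) as [l [Hl [Hlz [Hlen [o [Ho [Hosc HI]]]]]]].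
    destruct (column_boxes f d (S M) Hc Hd) as [o' [Ho' [Hosc' [l' [Hl' [Hlz' [Hl1' Hlo']]]]]]];
      [rewrite S_INR; lra|].
    rewrite S_INR in *.
    exists (l ++ l'). split.
    { apply NoDup_app; auto. intros a Ha Ha'.
      destruct (Hlz a Ha) as [A _]. destruct (Hlz' a Ha') as [B _]. lia. }
    split.
    { intros z Hz. apply in_app_or in Hz as [Hz|Hz].
      - destruct (Hlz z Hz) as [A B]. split; [lia|exact B].
      - destruct (Hlz' z Hz) as [A B]. split; [lia|exact B]. }
    split; [rewrite length_app; lia|].
    exists o'. split; [exact Ho'|]. split; [exact Hosc'|].
    rewrite Rmult_plus_distr_r, Rmult_1_l in *.
    rewrite <- (RInt_Chasles _ 0 (INR M * d) (INR M * d + d))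
      by (apply ex_RInt_continuity, continuity_abs_increment; auto).
    unfold plus; simpl.
    pose proof (RInt_abs_increment_column f (INR M * d) d h o o' Hc Hh Hosc Hosc') as Hlast.
    rewrite length_app, plus_INR.
    assert (d * o' <= d * (INR (length l') * d)) by (apply Rmult_le_compat_l; lra).
    nra.
Qed.

Lemma boxes_lower_bound f d h n (M : nat) : continuity f -> 0 < d -> 0 < h <= d ->
  INR M * d + d <= PI -> has_card (box_meets (graph_0pi f) d) n ->
  INR M + 1 <= INR n /\ RInt (fun x => Rabs (f (x + h) - f x)) 0 (INR M * d) <= 2 * d * d * INR n.
Proof.
  intros Hc Hd Hh HM [L [HL [<- HLA]]].
  destruct (columns_boxes f d h M Hc Hd Hh HM) as [l [Hl [Hlz [Hlen [o [Ho [_ HI]]]]]]].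
  assert (Hsub : (length l <= length L)%nat).
  { apply NoDup_incl_length; auto. intros z Hz. apply HLA, Hlz, Hz. }
  apply le_INR in Hsub. apply le_INR in Hlen. rewrite plus_INR in Hlen. simpl in Hlen.
  split; [lra|].
  assert (0 <= d * o) by (apply Rmult_le_pos; lra).
  assert (2 * d * d * INR (length l) <= 2 * d * d * INR (length L)) by (apply Rmult_le_compat_l; [nra|auto]).
  lra.
Qed.

Definition increments_le (f : R -> R) (d w : R) : Prop :=
  forall x y, 0 <= x <= PI -> 0 <= y <= PI -> Rabs (x - y) <= d -> Rabs (f x - f y) <= w.

Lemma up_ge1 z : 0 <= z -> (1 <= up z)%Z.
Proof.
  intros H. destruct (archimed z) as [H1 _].
  apply le_IZR. destruct (Z_le_gt_dec 1 (up z)) as [h|h]; [apply IZR_le; exact h|].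
  assert (up z <= 0)%Z as h' by lia. apply IZR_le in h'. lra.
Qed.

Definition column_anchor (d : R) (m : Z) : R := Rmax 0 (Rmin PI (IZR m * d)).

Definition lowest_row (f : R -> R) (d w : R) (m : Z) : Z := (Int_part ((f (column_anchor d m) - w) / d) - 1)%Z.

(* Within column [m], the graph stays within [w] of its value at the anchor point. *)
Lemma box_meets_range f d w m r : 0 < d -> increments_le f d w ->
  box_meets (graph_0pi f) d (m, r) ->
  (-1 <= m < up (PI / d))%Z /\ (lowest_row f d w m <= r < lowest_row f d w m + up (2 * w / d) + 2)%Z.
Proof.
  intros Hd Hf [[x y] [[Hx Hy] [Hm Hr]]]. simpl in *. subst y.
  assert (HPI : 0 < PI) by apply PI_RGT_0.
  split; [split|].
  - apply le_IZR. apply Rmult_le_reg_r with d; auto. nra.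
  - apply lt_IZR. destruct (archimed (PI / d)) as [A _]. eapply Rle_lt_trans; [|apply A].
    apply Rmult_le_reg_r with d; auto. unfold Rdiv. rewrite Rmult_assoc, Rinv_l, Rmult_1_r by lra. lra.
  - set (xr := column_anchor d m).
    assert (Hxr1 : 0 <= xr <= PI)
      by (unfold xr, column_anchor; split; [apply Rmax_l|apply Rmax_lub; [lra|apply Rmin_l]]).
    assert (Hxr2 : Rabs (x - xr) <= d).
    { unfold xr, column_anchor. destruct (Rle_dec (IZR m * d) 0).
      + rewrite Rmin_right, Rmax_left by lra. apply Rabs_le. nra.
      + rewrite Rmin_right, Rmax_right by lra. apply Rabs_le. nra. }
    pose proof (Hf x xr Hx Hxr1 Hxr2) as Hfw. apply Rabs_le_between in Hfw.
    unfold lowest_row. fold xr. set (yy := (f xr - w) / d).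
    destruct (Int_part_bounds yy) as [F1 F2]. destruct (archimed (2 * w / d)) as [A _].
    assert (yy <= IZR r + 1 /\ IZR r <= yy + 2 * w / d) as [Hr1 Hr2].
    { unfold yy. split; apply Rmult_le_reg_r with d; auto; unfold Rdiv;
        rewrite ?Rmult_plus_distr_r, !Rmult_assoc, Rinv_l, Rmult_1_r by lra; lra. }
    split; [apply le_IZR|apply lt_IZR]; rewrite ?plus_IZR, !minus_IZR; simpl; lra.
Qed.

Lemma boxes_cover f d w : 0 < d -> 0 <= w -> increments_le f d w ->
  exists L : list (Z * Z), (forall z, box_meets (graph_0pi f) d z -> In z L) /\
     INR (length L) <= (PI / d + 2) * (2 * w / d + 3).
Proof.
  intros Hd Hw Hf.
  assert (HPI : 0 < PI) by apply PI_RGT_0.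
  assert (Hid : 0 <= / d) by (left; apply Rinv_0_lt_compat; auto).
  assert (Hup1 : (1 <= up (PI / d))%Z) by (apply up_ge1; unfold Rdiv; apply Rmult_le_pos; lra).
  assert (Hup2 : (1 <= up (2 * w / d))%Z) by (apply up_ge1; unfold Rdiv; apply Rmult_le_pos; lra).
  set (U := Z.to_nat (up (PI / d))).
  set (R0 := (Z.to_nat (up (2 * w / d)) + 1)%nat).
  set (g := fun ab : nat * nat =>
    let m := (Z.of_nat (fst ab) - 1)%Z in (m, (lowest_row f d w m + Z.of_nat (snd ab))%Z)).
  exists (map g (list_prod (seq 0 (U + 1)) (seq 0 (R0 + 1)))).
  split.
  - intros [m r] Hmr. destruct (box_meets_range f d w m r Hd Hf Hmr) as [Hm Hr].
    apply in_map_iff. exists (Z.to_nat (m + 1), Z.to_nat (r - lowest_row f d w m)). split.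
    + unfold g. simpl. replace (Z.of_nat (Z.to_nat (m + 1)) - 1)%Z with m by lia.
      rewrite Z2Nat.id by lia. f_equal; lia.
    + apply in_prod_iff. unfold U, R0. split; apply in_seq; split; lia.
  - rewrite length_map, length_prod, !length_seq, mult_INR, !plus_INR. simpl INR.
    assert (HU : INR U <= PI / d + 1).
    { unfold U. rewrite INR_IZR_INZ, Z2Nat.id by lia. destruct (archimed (PI / d)); lra. }
    assert (HR : INR R0 <= 2 * w / d + 2).
    { unfold R0. rewrite plus_INR, INR_IZR_INZ, Z2Nat.id by lia. destruct (archimed (2 * w / d)); simpl; lra. }
    apply Rmult_le_compat; try (apply Rplus_le_le_0_compat; [apply pos_INR|lra]); lra.
Qed.

Lemma boxes_finite f d w : 0 < d -> 0 <= w -> increments_le f d w ->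
  exists n, has_card (box_meets (graph_0pi f) d) n.
Proof.
  intros Hd Hw Hf. destruct (boxes_cover f d w Hd Hw Hf) as [L [HL _]].
  set (P := fun z => if excluded_middle_informative (box_meets (graph_0pi f) d z) then true else false).
  assert (Zp : forall x y : Z * Z, {x = y} + {x <> y}) by (decide equality; apply Z.eq_dec).
  exists (length (nodup Zp (filter P L))), (nodup Zp (filter P L)).
  split; [apply NoDup_nodup|]. split; [reflexivity|].
  intros z. rewrite nodup_In, filter_In. unfold P.
  destruct (excluded_middle_informative (box_meets (graph_0pi f) d z)); split; intros H; try tauto.
  - split; auto.
  - destruct H; discriminate.
Qed.

Lemma boxes_upper_bound f d w n : 0 < d -> 0 <= w -> increments_le f d w ->
  has_card (box_meets (graph_0pi f) d) n -> INR n <= (PI / d + 2) * (2 * w / d + 3).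
Proof.
  intros Hd Hw Hf [l [Hl [<- Hla]]]. destruct (boxes_cover f d w Hd Hw Hf) as [L [HL HLn]].
  eapply Rle_trans; [|apply HLn]. apply le_INR. apply NoDup_incl_length; auto.
  intros z Hz. apply HL, Hla, Hz.
Qed.

Lemma RInt_shift_half_period f J a b : continuity f -> 0 < J ->
  RInt (fun x => f (x + PI / J) * cos (J * x)) a b = - RInt (fun x => f x * cos (J * x)) (a + PI / J) (b + PI / J).
Proof.
  intros Hc HJ. set (F := fun x => f x * cos (J * x)).
  assert (HF : continuity F) by (apply continuity_mult; auto; apply continuity_cos_mul).
  transitivity (RInt (fun y => opp (F (y + PI / J))) a b).
  - apply RInt_ext. intros x _. unfold F.
    change (f (x + PI / J) * cos (J * x) = - (f (x + PI / J) * cos (J * (x + PI / J)))).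
    replace (J * (x + PI / J)) with (J * x + PI) by (field; apply Rgt_not_eq; exact HJ). rewrite neg_cos. ring.
  - rewrite (RInt_opp (fun y => F (y + PI / J))) by (apply ex_RInt_continuity, continuity_shift; auto).
    rewrite RInt_shift by auto. reflexivity.
Qed.

Lemma Rabs_RInt_abs_increment_le f B h a b : continuity f -> (forall x, Rabs (f x) <= B) -> a <= b ->
  Rabs (RInt (fun x => Rabs (f (x + h) - f x)) a b) <= (b - a) * (2 * B).
Proof.
  intros Hc HB Hab. apply Rabs_RInt_le_const; [exact Hab|apply continuity_abs_increment; auto|].
  intros x _. rewrite Rabs_Rabsolu. unfold Rminus.
  eapply Rle_trans; [apply Rabs_triang|]. rewrite Rabs_Ropp. pose proof (HB (x + h)). pose proof (HB x). lra.
Qed.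

Lemma Rabs_RInt_mul_cos_minus_le f J h a b : continuity f -> a <= b ->
  Rabs (RInt (fun x => f x * cos (J * x)) a b - RInt (fun x => f (x + h) * cos (J * x)) a b)
    <= RInt (fun x => Rabs (f (x + h) - f x)) a b.
Proof.
  intros Hc Hab.
  assert (HF : continuity (fun x => f x * cos (J * x))) by (apply continuity_mult; auto; apply continuity_cos_mul).
  assert (HG : continuity (fun x => f (x + h) * cos (J * x)))
    by (apply continuity_mult; [apply continuity_shift; auto|apply continuity_cos_mul]).
  change (RInt ?u a b - RInt ?v a b) with (minus (RInt u a b) (RInt v a b)).
  rewrite <- RInt_minus by (apply ex_RInt_continuity; auto).
  eapply Rle_trans; [apply abs_RInt_le; [lra|apply ex_RInt_continuity, continuity_minus; auto]|].
  apply RInt_le; [lra| |apply ex_RInt_continuity, continuity_abs_increment; auto|].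
  - apply ex_RInt_continuity, (continuity_comp _ Rabs); [apply continuity_minus; auto|apply Rcontinuity_abs].
  - intros x _. change (minus ?u ?v) with (u - v).
    rewrite <- Rmult_minus_distr_r, Rabs_mult, Rabs_minus_sym.
    pose proof (Rabs_le (cos (J * x)) 1 (COS_bound _)). pose proof (Rabs_pos (f (x + h) - f x)). nra.
Qed.

(* Shifting by half a period [PI / J] flips the sign of [cos (J x)], so the
   coefficient is half the integral of [(f x - f (x + PI / J)) cos (J x)]. *)
Lemma fourier_coef_le_increment f B J : continuity f -> (forall x, Rabs (f x) <= B) ->
  0 < J -> PI / J <= PI ->
  2 * Rabs (RInt (fun x => f x * cos (J * x)) 0 PI) - 4 * (PI / J) * B <=
  RInt (fun x => Rabs (f (x + PI / J) - f x)) 0 (PI - PI / J).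
Proof.
  intros Hc HB HJ HhP. pose proof PI_RGT_0 as HPI.
  assert (Hh : 0 < PI / J) by (apply Rdiv_lt_0_compat; lra).
  pose proof (RInt_shift_half_period f J 0 PI Hc HJ) as EG.
  pose proof (Rabs_RInt_mul_cos_minus_le f J (PI / J) 0 PI Hc ltac:(lra)) as BD.
  pose proof (Rabs_RInt_abs_increment_le f B (PI / J) (PI - PI / J) PI Hc HB ltac:(lra)) as Bg.
  set (h := PI / J) in *. rewrite Rplus_0_l in EG.
  set (F := fun x => f x * cos (J * x)) in *.
  assert (HF : continuity F) by (apply continuity_mult; auto; apply continuity_cos_mul).
  assert (HFb : forall x, Rabs (F x) <= B).
  { intros x. unfold F. rewrite Rabs_mult. pose proof (Rabs_le (cos (J * x)) 1 (COS_bound _)).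
    pose proof (HB x). pose proof (Rabs_pos (f x)). pose proof (Rabs_pos (cos (J * x))). nra. }
  set (g := fun x => Rabs (f (x + h) - f x)) in *.
  assert (C1 : RInt F 0 h + RInt F h PI = RInt F 0 PI) by (apply RInt_Chasles_continuity; auto).
  assert (C2 : RInt F h PI + RInt F PI (PI + h) = RInt F h (PI + h)) by (apply RInt_Chasles_continuity; auto).
  assert (B1 : Rabs (RInt F 0 h) <= (h - 0) * B) by (apply Rabs_RInt_le_const; auto; lra).
  assert (B2 : Rabs (RInt F PI (PI + h)) <= (PI + h - PI) * B) by (apply Rabs_RInt_le_const; auto; lra).
  assert (Cg : RInt g 0 (PI - h) + RInt g (PI - h) PI = RInt g 0 PI)
    by (apply RInt_Chasles_continuity, continuity_abs_increment; auto).
  apply Rabs_le_between in B1. apply Rabs_le_between in B2. apply Rabs_le_between in Bg.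
  apply Rabs_le_between in BD. rewrite EG in BD.
  destruct (Rle_dec 0 (RInt F 0 PI)); [rewrite Rabs_pos_eq by auto|rewrite Rabs_left by lra]; lra.
Qed.

Lemma grid_count d : 0 < d < 1 -> exists M : nat, INR M * d + d <= PI /\ PI - 2 * d <= INR M * d.
Proof.
  intros Hd. pose proof PI_RGT_0. pose proof PI2_3_2.
  destruct (Int_part_div_mul PI d ltac:(lra)) as [F1 F2]. set (z := Int_part (PI / d)) in *.
  assert (Hz : (0 < z)%Z).
  { apply lt_IZR. simpl. apply Rmult_lt_reg_r with d; lra. }
  exists (Z.to_nat z - 1)%nat.
  rewrite minus_INR, INR_IZR_INZ, Z2Nat.id by lia. simpl. split; lra.
Qed.

Lemma fourier_coef_boxes f B d n J : continuity f -> (forall x, Rabs (f x) <= B) ->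
  0 < d < 1 -> PI / d <= J -> has_card (box_meets (graph_0pi f) d) n ->
  Rabs (RInt (fun x => f x * cos (J * x)) 0 PI) <= d * d * INR n + 4 * d * B.
Proof.
  intros Hc HB Hd HJ Hn. pose proof PI_RGT_0.
  assert (HB0 : 0 <= B) by (pose proof (HB 0); pose proof (Rabs_pos (f 0)); lra).
  assert (HJ0 : 0 < J) by (apply Rlt_le_trans with (PI / d); [apply Rdiv_lt_0_compat|]; lra).
  set (h := PI / J).
  assert (Hh : 0 < h <= d).
  { unfold h. split; [apply Rdiv_lt_0_compat; lra|].
    apply Rmult_le_reg_r with (J / d); [apply Rdiv_lt_0_compat; lra|].
    replace (PI / J * (J / d)) with (PI / d) by (field; lra).
    replace (d * (J / d)) with J by (field; lra). lra. }
  destruct (grid_count d Hd) as [M [HM1 HM2]].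
  destruct (boxes_lower_bound f d h n M Hc ltac:(lra) Hh HM1 Hn) as [_ Low].
  assert (HhPI : h <= PI) by (pose proof PI2_3_2; lra).
  pose proof (fourier_coef_le_increment f B J Hc HB HJ0 HhPI) as Sh. fold h in Sh.
  pose proof (Rabs_RInt_abs_increment_le f B h (INR M * d) (PI - h) Hc HB ltac:(lra)) as Bg.
  set (g := fun x => Rabs (f (x + h) - f x)) in *.
  assert (Cg : RInt g 0 (INR M * d) + RInt g (INR M * d) (PI - h) = RInt g 0 (PI - h))
    by (apply RInt_Chasles_continuity, continuity_abs_increment; auto).
  apply Rabs_le_between in Bg.
  assert ((PI - h - INR M * d) * (2 * B) <= (2 * d) * (2 * B)) by (apply Rmult_le_compat_r; lra).
  assert (h * B <= d * B) by (apply Rmult_le_compat_r; lra).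
  lra.
Qed.

(** * Geometrically weighted series *)

Lemma Rabs_Series_le a b : (forall n, Rabs (a n) <= b n) -> ex_series b -> Rabs (Series a) <= Series b.
Proof.
  intros H Hb.
  assert (Ha : ex_series (fun n => Rabs (a n))).
  { apply (@ex_series_le R_AbsRing R_CompleteNormedModule) with (b := b); auto.
    intros n. change (norm (Rabs (a n))) with (Rabs (Rabs (a n))). rewrite Rabs_Rabsolu. auto. }
  eapply Rle_trans; [apply Series_Rabs; auto|]. apply Series_le; auto.
  intros n; split; [apply Rabs_pos|auto].
Qed.

Definition wseries (r : R) (u : nat -> R) : R := Series (fun n => r ^ n * u n).

Section WeightedSeries.
Variable r : R.
Hypothesis r_bounds : 0 <= r < 1.

Lemma ex_series_geom_r : ex_series (fun n => r ^ n).
Proof. apply ex_series_geom. rewrite Rabs_pos_eq; lra. Qed.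

Lemma Rabs_pow_mul_le a n : Rabs a <= 1 -> Rabs (r ^ n * a) <= r ^ n.
Proof.
  intros Hu. assert (Hrn : 0 <= r ^ n) by (apply pow_le; lra).
  rewrite Rabs_mult, (Rabs_pos_eq (r ^ n)) by exact Hrn. nra.
Qed.

Lemma ex_series_weighted u : (forall n, Rabs (u n) <= 1) -> ex_series (fun n => r ^ n * u n).
Proof.
  intros u_le1. apply (@ex_series_le R_AbsRing R_CompleteNormedModule) with (b := fun n => r ^ n);
    [intros n; apply Rabs_pow_mul_le, u_le1|apply ex_series_geom_r].
Qed.

Variables u v : nat -> R.
Hypothesis u_le1 : forall n, Rabs (u n) <= 1.
Hypothesis v_le1 : forall n, Rabs (v n) <= 1.

Lemma Rabs_wseries_le : Rabs (wseries r u) <= / (1 - r).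
Proof.
  unfold wseries. rewrite <- Series_geom by (rewrite Rabs_pos_eq; lra).
  apply Rabs_Series_le; [intros n; apply Rabs_pow_mul_le, u_le1|apply ex_series_geom_r].
Qed.

Lemma Rabs_wpartial_le K : Rabs (sum_f_R0 (fun n => r ^ n * u n) K) <= / (1 - r).
Proof.
  eapply Rle_trans; [apply sum_f_R0_triangle|].
  apply Rle_trans with (sum_f_R0 (fun n => r ^ n) K).
  - apply sum_Rle. intros n _. apply Rabs_pow_mul_le, u_le1.
  - rewrite tech3 by lra. unfold Rdiv. rewrite <- (Rmult_1_l (/ (1 - r))) at 2.
    apply Rmult_le_compat_r; [left; apply Rinv_0_lt_compat; lra|].
    assert (0 <= r ^ S K) by (apply pow_le; lra). lra.
Qed.

Lemma Rabs_wseries_minus_le c rho : 0 <= rho < 1 ->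
  (forall n, r ^ n * Rabs (u n - v n) <= c * rho ^ n) ->
  Rabs (wseries r u - wseries r v) <= c / (1 - rho).
Proof.
  intros Hrho H. unfold wseries.
  rewrite <- Series_minus by (apply ex_series_weighted; auto).
  unfold Rdiv. rewrite <- Series_geom by (rewrite Rabs_pos_eq; lra).
  rewrite <- Series_scal_l. apply Rabs_Series_le.
  - intros n. change (minus (r ^ n * u n) (r ^ n * v n)) with (r ^ n * u n - r ^ n * v n).
    rewrite <- Rmult_minus_distr_l, Rabs_mult, (Rabs_pos_eq (r ^ n)) by (apply pow_le; lra). auto.
  - apply (@ex_series_scal_l R_AbsRing R_NormedModule). apply ex_series_geom. rewrite Rabs_pos_eq; lra.
Qed.

Lemma Rabs_wseries_tail_le K :
  Rabs (wseries r u - sum_f_R0 (fun n => r ^ n * u n) K) <= r ^ S K / (1 - r).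
Proof.
  unfold wseries. rewrite (Series_incr_n _ (S K)) by (lia || apply ex_series_weighted, u_le1).
  simpl Init.Nat.pred.
  match goal with |- Rabs (?S + ?T - ?S) <= _ => replace (S + T - S) with T by ring end.
  unfold Rdiv. rewrite <- Series_geom by (rewrite Rabs_pos_eq; lra).
  rewrite <- Series_scal_l. apply Rabs_Series_le.
  - intros n. rewrite pow_add, Rmult_assoc, Rabs_mult, (Rabs_pos_eq (r ^ S K)) by (apply pow_le; lra).
    apply Rmult_le_compat_l; [apply pow_le; lra|apply Rabs_pow_mul_le, u_le1].
  - apply (@ex_series_scal_l R_AbsRing R_NormedModule). apply ex_series_geom_r.
Qed.

End WeightedSeries.

(** * Hölder regularity of the density *)

Lemma Rabs_sin_le x : Rabs (sin x) <= Rabs x.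
Proof.
  assert (K : forall y, 0 <= y -> Rabs (sin y) <= y).
  { intros y Hy. apply Rabs_le. split.
    - destruct (Rle_dec 1 y); [pose proof (SIN_bound y); lra|].
      assert (0 <= sin y) by (apply sin_ge_0; [lra|pose proof PI2_3_2; lra]). lra.
    - destruct (Req_dec y 0) as [->|]; [rewrite sin_0; lra|left; apply sin_lt_x; lra]. }
  destruct (Rle_dec 0 x).
  - rewrite (Rabs_pos_eq x) by auto. apply K; auto.
  - replace x with (- (- x)) by ring.
    rewrite sin_neg, Rabs_Ropp, Rabs_Ropp, (Rabs_pos_eq (- x)) by lra. apply K; lra.
Qed.

Lemma sin_lipschitz a b : Rabs (sin a - sin b) <= Rabs (a - b).
Proof.
  rewrite form4, !Rabs_mult, (Rabs_pos_eq 2) by lra.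
  pose proof (Rabs_le _ 1 (COS_bound ((a + b) / 2))). pose proof (Rabs_sin_le ((a - b) / 2)) as Hsin.
  pose proof (Rabs_pos (cos ((a + b) / 2))). pose proof (Rabs_pos (sin ((a - b) / 2))).
  replace (Rabs ((a - b) / 2)) with (Rabs (a - b) / 2) in Hsin
    by (unfold Rdiv; rewrite Rabs_mult, (Rabs_pos_eq (/ 2)) by lra; reflexivity).
  nra.
Qed.

Lemma Rpower_pos D th : 0 < Rpower D th.
Proof. apply exp_pos. Qed.

Lemma Rpower_ge1 D th : 1 <= D -> 0 <= th -> 1 <= Rpower D th.
Proof. intros HD Hth. rewrite <- (Rpower_O D) by lra. apply Rle_Rpower; auto. Qed.

Lemma sin_holder th a b D : 0 < th <= 1 -> 0 < D -> Rabs (a - b) <= D ->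
  Rabs (sin a - sin b) <= 2 * Rpower D th.
Proof.
  intros Hth HD Hab. destruct (Rle_dec 1 D).
  - pose proof (Rpower_ge1 D th r ltac:(lra)).
    unfold Rminus. eapply Rle_trans; [apply Rabs_triang|]. rewrite Rabs_Ropp.
    pose proof (Rabs_le _ 1 (SIN_bound a)). pose proof (Rabs_le _ 1 (SIN_bound b)). lra.
  - assert (D <= Rpower D th).
    { rewrite <- (Rpower_1 D) at 1 by lra. unfold Rpower.
      assert (ln D < 0) by (rewrite <- ln_1; apply ln_increasing; lra).
      destruct (Req_dec th 1) as [->|]; [lra|left; apply exp_increasing; nra]. }
    pose proof (sin_lipschitz a b). lra.
Qed.

Lemma Rpower_pow_mul Q n d th : 0 < Q -> 0 < d ->
  Rpower (Q ^ n * d) th = Rpower Q th ^ n * Rpower d th.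
Proof.
  intros HQ Hd. rewrite <- Rpower_mult_distr by (try apply pow_lt; auto).
  f_equal. rewrite <- Rpower_pow by auto. rewrite <- Rpower_pow by apply Rpower_pos.
  rewrite !Rpower_mult. f_equal. ring.
Qed.

Lemma holder_continuity f C th : 0 < th -> 0 <= C ->
  (forall d x y, 0 < d -> Rabs (x - y) <= d -> Rabs (f x - f y) <= C * Rpower d th) -> continuity f.
Proof.
  intros Hth HC Hf x eps Heps.
  set (a := eps / (C + 1)).
  assert (Ha : 0 < a) by (unfold a; apply Rdiv_lt_0_compat; lra).
  exists (Rpower a (/ th)). split; [apply Rpower_pos|].
  intros y [_ Hy]. simpl in *. unfold R_dist in *.
  assert (H : Rabs (f y - f x) <= C * Rpower (Rpower a (/ th)) th) by (apply Hf; [apply Rpower_pos|lra]).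
  rewrite Rpower_mult, Rinv_l, Rpower_1 in H by lra.
  assert (C * a < eps).
  { unfold a, Rdiv. rewrite <- Rmult_assoc. apply Rmult_lt_reg_r with (C + 1); [lra|].
    rewrite Rmult_assoc, Rinv_l by lra. nra. }
  lra.
Qed.

Lemma Rabs_sum_sq_minus_le a b c d S : Rabs a <= S -> Rabs b <= S -> Rabs c <= S -> Rabs d <= S ->
  Rabs ((a ^ 2 + c ^ 2) - (b ^ 2 + d ^ 2)) <= 2 * S * (Rabs (a - b) + Rabs (c - d)).
Proof.
  intros Ha Hb Hc Hd.
  replace ((a ^ 2 + c ^ 2) - (b ^ 2 + d ^ 2)) with ((a - b) * (a + b) + (c - d) * (c + d)) by ring.
  eapply Rle_trans; [apply Rabs_triang|]. rewrite !Rabs_mult.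
  assert (Rabs (a + b) <= 2 * S) by (eapply Rle_trans; [apply Rabs_triang|lra]).
  assert (Rabs (c + d) <= 2 * S) by (eapply Rle_trans; [apply Rabs_triang|lra]).
  pose proof (Rabs_pos (a - b)). pose proof (Rabs_pos (c - d)).
  pose proof (Rabs_pos (a + b)). pose proof (Rabs_pos (c + d)). nra.
Qed.

(* [Psi = N (ReS - i ImS)], hence [P = N^2 (ReS^2 + ImS^2)]. *)
Definition ratio (q : nat) (s : R) : R := Rpower (INR q) (s - 2).
Definition mode_cos (q : nat) (t x : R) (n : nat) : R := sin (INR q ^ n * x) * cos (INR q ^ (2 * n) * t).
Definition mode_sin (q : nat) (t x : R) (n : nat) : R := sin (INR q ^ n * x) * sin (INR q ^ (2 * n) * t).
Definition ReS (q : nat) (s t x : R) : R := wseries (ratio q s) (mode_cos q t x).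
Definition ImS (q : nat) (s t x : R) : R := wseries (ratio q s) (mode_sin q t x).
Definition ReS_trunc (q : nat) (s t : R) (K : nat) (x : R) : R :=
  sum_f_R0 (fun n => ratio q s ^ n * mode_cos q t x n) K.
Definition ImS_trunc (q : nat) (s t : R) (K : nat) (x : R) : R :=
  sum_f_R0 (fun n => ratio q s ^ n * mode_sin q t x n) K.
Definition Pdens_trunc (q : nat) (s t : R) (K : nat) (x : R) : R :=
  Nconst q s ^ 2 * (ReS_trunc q s t K x ^ 2 + ImS_trunc q s t K x ^ 2).
Definition series_bound (q : nat) (s : R) : R := / (1 - ratio q s).
Definition holder_ratio (q : nat) (s th : R) : R := ratio q s * Rpower (INR q) th.
Definition holder_const (q : nat) (s th : R) : R :=
  Nconst q s ^ 2 * (2 * series_bound q s) * (4 / (1 - holder_ratio q s th)).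

Lemma INR_gt1 q : (2 <= q)%nat -> 1 < INR q.
Proof. intros H. apply le_INR in H. simpl in H. lra. Qed.

Lemma Rabs_mode_cos_le1 q t x n : Rabs (mode_cos q t x n) <= 1.
Proof.
  unfold mode_cos. rewrite Rabs_mult.
  pose proof (Rabs_le _ 1 (SIN_bound (INR q ^ n * x))). pose proof (Rabs_le _ 1 (COS_bound (INR q ^ (2 * n) * t))).
  pose proof (Rabs_pos (sin (INR q ^ n * x))). pose proof (Rabs_pos (cos (INR q ^ (2 * n) * t))). nra.
Qed.

Lemma Rabs_mode_sin_le1 q t x n : Rabs (mode_sin q t x n) <= 1.
Proof.
  unfold mode_sin. rewrite Rabs_mult.
  pose proof (Rabs_le _ 1 (SIN_bound (INR q ^ n * x))). pose proof (Rabs_le _ 1 (SIN_bound (INR q ^ (2 * n) * t))).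
  pose proof (Rabs_pos (sin (INR q ^ n * x))). pose proof (Rabs_pos (sin (INR q ^ (2 * n) * t))). nra.
Qed.

Section Density.
Variables (q : nat) (s t : R).
Hypothesis q_ge2 : (2 <= q)%nat.
Hypothesis s_lt2 : s < 2.

Lemma ratio_bounds : 0 < ratio q s < 1.
Proof.
  unfold ratio. split; [apply Rpower_pos|].
  pose proof (INR_gt1 q q_ge2). rewrite <- (Rpower_O (INR q)) by lra. apply Rpower_lt; lra.
Qed.

Lemma ratio_pow k : ratio q s ^ k = Rpower (INR q ^ k) (s - 2).
Proof.
  pose proof (INR_gt1 q q_ge2). unfold ratio.
  rewrite <- Rpower_pow by apply Rpower_pos. rewrite <- Rpower_pow by lra.
  rewrite !Rpower_mult. f_equal. ring.
Qed.

Lemma series_bound_ge1 : 1 <= series_bound q s.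
Proof.
  pose proof ratio_bounds. unfold series_bound. rewrite <- Rinv_1. apply Rinv_le_contravar; lra.
Qed.

Lemma Nconst_sq_pos : 0 < Nconst q s ^ 2.
Proof.
  pose proof ratio_bounds. unfold Nconst.
  assert (E : Rpower (INR q) (2 * (s - 2)) = ratio q s ^ 2).
  { unfold ratio. rewrite <- Rpower_pow by apply Rpower_pos. rewrite Rpower_mult. f_equal. simpl. ring. }
  rewrite E. assert (Hpos : 0 < 2 / PI * (1 - ratio q s ^ 2)).
  { apply Rmult_lt_0_compat; [apply Rdiv_lt_0_compat; [lra|apply PI_RGT_0]|nra]. }
  rewrite <- Rsqr_pow2, Rsqr_sqrt by lra. exact Hpos.
Qed.

Lemma Pdens_series x : Pdens q s x t = Nconst q s ^ 2 * (ReS q s t x ^ 2 + ImS q s t x ^ 2).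
Proof.
  assert (Hcoef : forall n, coef q s n = ratio q s ^ n).
  { intros n. unfold coef, ratio. rewrite <- Rpower_pow by apply Rpower_pos.
    rewrite Rpower_mult. f_equal. ring. }
  unfold Pdens, RePsi, ImPsi, ReS, ImS, wseries.
  rewrite (Series_ext _ (fun n => ratio q s ^ n * mode_cos q t x n)),
    (Series_ext (fun n => _ * sin _ * sin _) (fun n => ratio q s ^ n * mode_sin q t x n)); [ring| |];
    intros n; rewrite Hcoef; unfold mode_cos, mode_sin; ring.
Qed.

Lemma Rabs_ReS_le x : Rabs (ReS q s t x) <= series_bound q s.
Proof. pose proof ratio_bounds. apply Rabs_wseries_le; [lra|apply Rabs_mode_cos_le1]. Qed.

Lemma Rabs_ImS_le x : Rabs (ImS q s t x) <= series_bound q s.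
Proof. pose proof ratio_bounds. apply Rabs_wseries_le; [lra|apply Rabs_mode_sin_le1]. Qed.

Lemma Rabs_Pdens_le x : Rabs (Pdens q s x t) <= 2 * Nconst q s ^ 2 * series_bound q s ^ 2.
Proof.
  rewrite Pdens_series. pose proof series_bound_ge1.
  assert (Hsq : forall a, Rabs a <= series_bound q s -> a ^ 2 <= series_bound q s ^ 2).
  { intros a Ha. rewrite <- !Rsqr_pow2. apply Rsqr_le_abs_1. rewrite (Rabs_pos_eq (series_bound q s)); lra. }
  pose proof (Hsq _ (Rabs_ReS_le x)). pose proof (Hsq _ (Rabs_ImS_le x)).
  pose proof (pow2_ge_0 (Nconst q s)). pose proof (pow2_ge_0 (ReS q s t x)). pose proof (pow2_ge_0 (ImS q s t x)).
  rewrite Rabs_pos_eq by (apply Rmult_le_pos; lra).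
  assert (Nconst q s ^ 2 * (ReS q s t x ^ 2 + ImS q s t x ^ 2) <= Nconst q s ^ 2 * (2 * series_bound q s ^ 2))
    by (apply Rmult_le_compat_l; lra).
  lra.
Qed.

Lemma holder_ratio_lt1 th : th < 2 - s -> holder_ratio q s th < 1.
Proof.
  intros Hth. pose proof (INR_gt1 q q_ge2). unfold holder_ratio, ratio. rewrite <- Rpower_plus.
  rewrite <- (Rpower_O (INR q)) by lra. apply Rpower_lt; lra.
Qed.

Section Holder.
Variable th : R.
Hypothesis th_bounds : 0 < th <= 1.
Hypothesis th_lt : holder_ratio q s th < 1.

(* Term [n] of the series oscillates at scale [q^-n], and [ratio q s * q^th < 1]
   makes the sum of the termwise Hölder bounds converge. *)
Lemma weighted_mode_holder d x y n c : 0 < d -> Rabs (x - y) <= d ->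
  ratio q s ^ n * Rabs ((sin (INR q ^ n * x) - sin (INR q ^ n * y)) * c)
    <= Rabs c * (2 * Rpower d th) * holder_ratio q s th ^ n.
Proof.
  intros Hd Hxy. pose proof (INR_gt1 q q_ge2). pose proof ratio_bounds.
  assert (Hs1 : Rabs (sin (INR q ^ n * x) - sin (INR q ^ n * y)) <= 2 * Rpower (INR q ^ n * d) th).
  { apply sin_holder; auto; [apply Rmult_lt_0_compat; [apply pow_lt|]; lra|].
    rewrite <- Rmult_minus_distr_l, Rabs_mult, Rabs_pos_eq by (apply pow_le; lra).
    apply Rmult_le_compat_l; auto. apply pow_le; lra. }
  rewrite Rpower_pow_mul in Hs1 by lra.
  unfold holder_ratio. rewrite Rpow_mult_distr, Rabs_mult.
  assert (0 <= ratio q s ^ n) by (apply pow_le; lra).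
  pose proof (Rabs_pos c). pose proof (Rabs_pos (sin (INR q ^ n * x) - sin (INR q ^ n * y))).
  assert (ratio q s ^ n * Rabs (sin (INR q ^ n * x) - sin (INR q ^ n * y))
            <= ratio q s ^ n * (2 * (Rpower (INR q) th ^ n * Rpower d th))) by (apply Rmult_le_compat_l; auto).
  nra.
Qed.

Lemma ReS_ImS_holder d x y : 0 < d -> Rabs (x - y) <= d ->
  Rabs (ReS q s t x - ReS q s t y) <= 2 * Rpower d th / (1 - holder_ratio q s th) /\
  Rabs (ImS q s t x - ImS q s t y) <= 2 * Rpower d th / (1 - holder_ratio q s th).
Proof.
  intros Hd Hxy. pose proof ratio_bounds. pose proof (Rpower_pos d th).
  assert (0 <= holder_ratio q s th) by (unfold holder_ratio; apply Rmult_le_pos; [lra|left; apply Rpower_pos]).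
  assert (Hfactor : forall c n, Rabs c <= 1 ->
    Rabs c * (2 * Rpower d th) * holder_ratio q s th ^ n <= 2 * Rpower d th * holder_ratio q s th ^ n).
  { intros c n Hc. assert (0 <= 2 * Rpower d th * holder_ratio q s th ^ n)
      by (apply Rmult_le_pos; [lra|apply pow_le; auto]).
    rewrite Rmult_assoc. pose proof (Rabs_pos c). nra. }
  split; apply Rabs_wseries_minus_le; try lra; try apply Rabs_mode_cos_le1; try apply Rabs_mode_sin_le1;
    intros n; unfold mode_cos, mode_sin; rewrite <- Rmult_minus_distr_r;
    (eapply Rle_trans; [apply (weighted_mode_holder d x y n _ Hd Hxy)|apply Hfactor, Rabs_le]);
    [apply COS_bound|apply SIN_bound].
Qed.

Lemma holder_const_nonneg : 0 <= holder_const q s th.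
Proof.
  unfold holder_const. pose proof series_bound_ge1. pose proof (pow2_ge_0 (Nconst q s)).
  apply Rmult_le_pos; [apply Rmult_le_pos; lra|]. unfold Rdiv. apply Rmult_le_pos; [lra|].
  left; apply Rinv_0_lt_compat; lra.
Qed.

Lemma Pdens_holder d x y : 0 < d -> Rabs (x - y) <= d ->
  Rabs (Pdens q s x t - Pdens q s y t) <= holder_const q s th * Rpower d th.
Proof.
  intros Hd Hxy. rewrite !Pdens_series.
  rewrite <- Rmult_minus_distr_l, Rabs_mult, Rabs_pos_eq by apply pow2_ge_0.
  destruct (ReS_ImS_holder d x y Hd Hxy) as [HRe HIm].
  pose proof (Rabs_sum_sq_minus_le _ _ _ _ _ (Rabs_ReS_le x) (Rabs_ReS_le y) (Rabs_ImS_le x) (Rabs_ImS_le y)).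
  unfold holder_const. pose proof series_bound_ge1. pose proof (pow2_ge_0 (Nconst q s)).
  set (Sb := series_bound q s) in *. set (rho := holder_ratio q s th) in *.
  assert (2 * Sb * (Rabs (ReS q s t x - ReS q s t y) + Rabs (ImS q s t x - ImS q s t y))
            <= 2 * Sb * (4 / (1 - rho)) * Rpower d th).
  { replace (2 * Sb * (4 / (1 - rho)) * Rpower d th)
      with (2 * Sb * (2 * Rpower d th / (1 - rho) + 2 * Rpower d th / (1 - rho))) by (field; lra).
    apply Rmult_le_compat_l; lra. }
  replace (Nconst q s ^ 2 * (2 * Sb) * (4 / (1 - rho)) * Rpower d th)
    with (Nconst q s ^ 2 * (2 * Sb * (4 / (1 - rho)) * Rpower d th)) by ring.
  apply Rmult_le_compat_l; lra.
Qed.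

End Holder.

Lemma Pdens_continuous : continuity (fun x => Pdens q s x t).
Proof.
  set (th := Rmin 1 ((2 - s) / 2)).
  assert (Hth : 0 < th <= 1) by (unfold th; split; [apply Rmin_glb_lt|apply Rmin_l]; lra).
  assert (Hrho : holder_ratio q s th < 1)
    by (apply holder_ratio_lt1; unfold th; pose proof (Rmin_r 1 ((2 - s) / 2)); lra).
  apply holder_continuity with (holder_const q s th) th; [lra|apply holder_const_nonneg; auto|].
  intros d x y Hd Hxy. apply Pdens_holder; auto.
Qed.

Lemma Pdens_trunc_error K x :
  Rabs (Pdens q s x t - Pdens_trunc q s t K x) <= Nconst q s ^ 2 * (4 * series_bound q s ^ 2 * ratio q s ^ S K).
Proof.
  pose proof ratio_bounds. rewrite Pdens_series. unfold Pdens_trunc.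
  rewrite <- Rmult_minus_distr_l, Rabs_mult, Rabs_pos_eq by apply pow2_ge_0.
  apply Rmult_le_compat_l; [apply pow2_ge_0|].
  assert (HA : Rabs (ReS_trunc q s t K x) <= series_bound q s)
    by (apply Rabs_wpartial_le; [lra|apply Rabs_mode_cos_le1]).
  assert (HB : Rabs (ImS_trunc q s t K x) <= series_bound q s)
    by (apply Rabs_wpartial_le; [lra|apply Rabs_mode_sin_le1]).
  eapply Rle_trans; [apply Rabs_sum_sq_minus_le; eauto using Rabs_ReS_le, Rabs_ImS_le|].
  assert (T1 : Rabs (ReS q s t x - ReS_trunc q s t K x) <= ratio q s ^ S K * series_bound q s)
    by (apply Rabs_wseries_tail_le; [lra|apply Rabs_mode_cos_le1]).
  assert (T2 : Rabs (ImS q s t x - ImS_trunc q s t K x) <= ratio q s ^ S K * series_bound q s)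
    by (apply Rabs_wseries_tail_le; [lra|apply Rabs_mode_sin_le1]).
  pose proof series_bound_ge1.
  assert (2 * series_bound q s * (Rabs (ReS q s t x - ReS_trunc q s t K x) + Rabs (ImS q s t x - ImS_trunc q s t K x))
            <= 2 * series_bound q s * (2 * (ratio q s ^ S K * series_bound q s))) by (apply Rmult_le_compat_l; lra).
  lra.
Qed.

End Density.

(** * Fourier coefficients at resonant frequencies *)

Definition int_cos_0pi (z : Z) : R := if Z.eq_dec z 0 then PI else 0.

Lemma is_RInt_cos_int (z : Z) : is_RInt (fun x => cos (IZR z * x)) 0 PI (int_cos_0pi z).
Proof.
  unfold int_cos_0pi. destruct (Z.eq_dec z 0) as [->|E].
  - apply is_RInt_ext with (fun _ => 1); [intros x _; rewrite Rmult_0_l, cos_0; reflexivity|].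
    replace PI with (scal (PI - 0) 1) at 2 by (unfold scal; simpl; unfold mult; simpl; ring).
    apply (@is_RInt_const R_NormedModule).
  - assert (Hz : IZR z <> 0) by (apply not_0_IZR; auto).
    set (F := fun x => sin (IZR z * x) / IZR z).
    assert (Hv : minus (F PI) (F 0) = 0).
    { unfold F. rewrite Rmult_0_r, sin_0, sin_eq_0_1 by (exists z; auto).
      unfold minus, plus, opp; simpl. field; auto. }
    rewrite <- Hv at 2. apply (@is_RInt_derive R_CompleteNormedModule).
    + intros x _. unfold F. auto_derive; auto. field; auto.
    + intros x _. apply continuity_pt_filterlim, continuity_cos_mul.
Qed.

Lemma sin_sin_cos A B C : sin A * sin B * cos C =
  / 4 * (cos (A - B - C) + cos (A - B + C) - cos (A + B - C) - cos (A + B + C)).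
Proof. unfold Rminus. rewrite !cos_plus, !sin_plus, !cos_neg, !sin_neg. field. Qed.

Definition int_ssc_0pi (a b c : nat) : R :=
  / 4 * (int_cos_0pi (Z.of_nat a - Z.of_nat b - Z.of_nat c) + int_cos_0pi (Z.of_nat a - Z.of_nat b + Z.of_nat c)
        - int_cos_0pi (Z.of_nat a + Z.of_nat b - Z.of_nat c) - int_cos_0pi (Z.of_nat a + Z.of_nat b + Z.of_nat c)).

Lemma is_RInt_sin_sin_cos (a b c : nat) :
  is_RInt (fun x => sin (INR a * x) * sin (INR b * x) * cos (INR c * x)) 0 PI (int_ssc_0pi a b c).
Proof.
  set (Z1 := (Z.of_nat a - Z.of_nat b - Z.of_nat c)%Z). set (Z2 := (Z.of_nat a - Z.of_nat b + Z.of_nat c)%Z).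
  set (Z3 := (Z.of_nat a + Z.of_nat b - Z.of_nat c)%Z). set (Z4 := (Z.of_nat a + Z.of_nat b + Z.of_nat c)%Z).
  apply is_RInt_ext
    with (fun x => / 4 * (cos (IZR Z1 * x) + cos (IZR Z2 * x) - cos (IZR Z3 * x) - cos (IZR Z4 * x))).
  - intros x _. rewrite sin_sin_cos. unfold Z1, Z2, Z3, Z4.
    rewrite !minus_IZR, !plus_IZR, ?minus_IZR, <- !INR_IZR_INZ.
    replace (INR a * x - INR b * x - INR c * x) with ((INR a - INR b - INR c) * x) by ring.
    replace (INR a * x - INR b * x + INR c * x) with ((INR a - INR b + INR c) * x) by ring.
    replace (INR a * x + INR b * x - INR c * x) with ((INR a + INR b - INR c) * x) by ring.
    replace (INR a * x + INR b * x + INR c * x) with ((INR a + INR b + INR c) * x) by ring.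
    reflexivity.
  - exact (is_RInt_scal _ 0 PI (/ 4) _ (is_RInt_minus _ _ 0 PI _ _
      (is_RInt_minus _ _ 0 PI _ _ (is_RInt_plus _ _ 0 PI _ _ (is_RInt_cos_int Z1) (is_RInt_cos_int Z2))
        (is_RInt_cos_int Z3)) (is_RInt_cos_int Z4))).
Qed.

Lemma int_ssc_0pi_pow q k n0 m n : (2 <= q)%nat -> admissible k n0 ->
  int_ssc_0pi (q ^ m) (q ^ n) (q ^ k + q ^ n0) =
  if Nat.eq_dec (q ^ m + q ^ n) (q ^ k + q ^ n0) then - PI / 4 else 0.
Proof.
  intros Hq Hk. unfold int_ssc_0pi, int_cos_0pi.
  pose proof (pow_ne_pow_add_admissible q Hq k n0 m n Hk). pose proof (pow_ne_pow_add_admissible q Hq k n0 n m Hk).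
  assert (Hpos : (1 <= q ^ k)%nat) by (pose proof (Nat.pow_nonzero q k ltac:(lia)); lia).
  repeat match goal with |- context [Z.eq_dec ?z 0] => destruct (Z.eq_dec z 0) end;
    destruct (Nat.eq_dec (q ^ m + q ^ n) (q ^ k + q ^ n0)); try lia; field.
Qed.

Lemma sum_f_R0_sq a K : (sum_f_R0 a K) ^ 2 = sum_f_R0 (fun m => sum_f_R0 (fun n => a m * a n) K) K.
Proof.
  replace ((sum_f_R0 a K) ^ 2) with (sum_f_R0 a K * sum_f_R0 a K) by ring.
  rewrite scal_sum. apply sum_eq. intros i _.
  rewrite scal_sum. apply sum_eq. intros j _. ring.
Qed.

Lemma sum_f_R0_mult_r F K c : sum_f_R0 F K * c = sum_f_R0 (fun i => F i * c) K.
Proof. rewrite Rmult_comm, scal_sum. reflexivity. Qed.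

Lemma double_sum_plus_scal c F G K :
  c * (sum_f_R0 (fun m => sum_f_R0 (F m) K) K + sum_f_R0 (fun m => sum_f_R0 (G m) K) K)
  = sum_f_R0 (fun m => sum_f_R0 (fun n => c * (F m n + G m n)) K) K.
Proof.
  rewrite <- sum_plus, scal_sum. apply sum_eq. intros m _.
  rewrite <- sum_plus, Rmult_comm, scal_sum. apply sum_eq. intros n _. ring.
Qed.

Lemma is_RInt_sum_f_R0 F v K a b : (forall i, (i <= K)%nat -> is_RInt (F i) a b (v i)) ->
  is_RInt (fun x => sum_f_R0 (fun i => F i x) K) a b (sum_f_R0 v K).
Proof.
  induction K; intros H; simpl; [apply H; auto|].
  exact (is_RInt_plus _ _ a b _ _ (IHK (fun i Hi => H i ltac:(lia))) (H (S K) ltac:(lia))).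
Qed.

Lemma sum_f_R0_only F K j : (j <= K)%nat ->
  (forall i, (i <= K)%nat -> i <> j -> F i = 0) -> sum_f_R0 F K = F j.
Proof.
  induction K; intros Hj H; simpl.
  - assert (j = 0%nat) by lia. subst; auto.
  - destruct (Nat.eq_dec j (S K)) as [->|].
    + rewrite sum_eq_R0; [ring|]. intros n Hn. apply H; lia.
    + rewrite IHK, (H (S K)) by (try lia; intros; apply H; lia). ring.
Qed.

Lemma sum_f_R0_only2 F K j1 j2 : (j1 <= K)%nat -> (j2 <= K)%nat -> j1 <> j2 ->
  (forall i, (i <= K)%nat -> i <> j1 -> i <> j2 -> F i = 0) -> sum_f_R0 F K = F j1 + F j2.
Proof.
  revert j1 j2. induction K; intros j1 j2 H1 H2 H12 H; [lia|]. simpl.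
  destruct (Nat.eq_dec j1 (S K)) as [->|E1]; [|destruct (Nat.eq_dec j2 (S K)) as [->|E2]].
  - rewrite (sum_f_R0_only F K j2) by (try lia; intros; apply H; lia). ring.
  - rewrite (sum_f_R0_only F K j1) by (try lia; intros; apply H; lia). ring.
  - rewrite (IHK j1 j2), (H (S K)) by (try lia; intros; apply H; lia). ring.
Qed.

Definition phase (q : nat) (t : R) (m n : nat) : R := cos (INR q ^ (2 * m) * t - INR q ^ (2 * n) * t).

Definition trunc_coef (q : nat) (s t : R) (J m n : nat) : R :=
  Nconst q s ^ 2 * (ratio q s ^ m * ratio q s ^ n * phase q t m n) * int_ssc_0pi (q ^ m) (q ^ n) J.

Lemma is_RInt_Pdens_trunc_cos q s t K J :
  is_RInt (fun x => Pdens_trunc q s t K x * cos (INR J * x)) 0 PI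
    (sum_f_R0 (fun m => sum_f_R0 (trunc_coef q s t J m) K) K).
Proof.
  apply is_RInt_ext with (fun x => sum_f_R0 (fun m => sum_f_R0 (fun n =>
    Nconst q s ^ 2 * (ratio q s ^ m * ratio q s ^ n * phase q t m n) *
    (sin (INR (q ^ m) * x) * sin (INR (q ^ n) * x) * cos (INR J * x))) K) K).
  { intros x _. unfold Pdens_trunc, ReS_trunc, ImS_trunc.
    rewrite !sum_f_R0_sq, double_sum_plus_scal, sum_f_R0_mult_r. apply sum_eq. intros m _.
    rewrite sum_f_R0_mult_r. apply sum_eq. intros n _.
    unfold phase, mode_cos, mode_sin. rewrite cos_minus, !pow_INR. ring. }
  apply is_RInt_sum_f_R0. intros m _. apply is_RInt_sum_f_R0. intros n _.
  exact (is_RInt_scal _ 0 PI _ _ (is_RInt_sin_sin_cos (q ^ m) (q ^ n) J)).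
Qed.

Lemma Pdens_trunc_fourier_coef q s t K k n0 : (2 <= q)%nat -> admissible k n0 -> (k <= K)%nat ->
  RInt (fun x => Pdens_trunc q s t K x * cos (INR (q ^ k + q ^ n0) * x)) 0 PI =
  - (PI / 2) * Nconst q s ^ 2 * (ratio q s ^ k * ratio q s ^ n0) * phase q t k n0.
Proof.
  intros Hq Hk HK.
  assert (Hkn : k <> n0) by (destruct Hk; lia).
  assert (Hn0 : (n0 <= K)%nat) by (destruct Hk; lia).
  assert (Hres : forall m n, trunc_coef q s t (q ^ k + q ^ n0) m n =
     if Nat.eq_dec (q ^ m + q ^ n) (q ^ k + q ^ n0)
     then - (PI / 4) * Nconst q s ^ 2 * (ratio q s ^ m * ratio q s ^ n * phase q t m n) else 0).
  { intros m n. unfold trunc_coef. rewrite int_ssc_0pi_pow by auto.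
    destruct (Nat.eq_dec _ _); field. }
  assert (Hzero : forall m n, ~ ((m = k /\ n = n0) \/ (m = n0 /\ n = k)) ->
     trunc_coef q s t (q ^ k + q ^ n0) m n = 0).
  { intros m n Hmn. rewrite Hres. destruct (Nat.eq_dec _ _) as [E|]; [|reflexivity].
    exfalso. apply Hmn, (pow_add_pow_eq_admissible q Hq k n0); auto. }
  apply is_RInt_unique.
  replace (- (PI / 2) * Nconst q s ^ 2 * (ratio q s ^ k * ratio q s ^ n0) * phase q t k n0)
    with (sum_f_R0 (fun m => sum_f_R0 (trunc_coef q s t (q ^ k + q ^ n0) m) K) K);
    [apply is_RInt_Pdens_trunc_cos|].
  rewrite (sum_f_R0_only2 _ K k n0), (sum_f_R0_only _ K n0), (sum_f_R0_only _ K k); auto.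
  - rewrite !Hres.
    destruct (Nat.eq_dec (q ^ k + q ^ n0) _); [|lia]. destruct (Nat.eq_dec (q ^ n0 + q ^ k) _); [|lia].
    assert (Hsym : phase q t n0 k = phase q t k n0).
    { unfold phase. rewrite <- cos_neg. f_equal. ring. }
    rewrite Hsym. field.
  - intros n _ Hn. apply Hzero. lia.
  - intros n _ Hn. apply Hzero. lia.
  - intros m _ Hm1 Hm2. apply sum_eq_R0. intros n _. apply Hzero. lia.
Qed.

Lemma cos_or_shifted_cos_large u w : sin w <> 0 ->
  Rabs (sin w) / 3 <= Rabs (cos u) \/ Rabs (sin w) / 3 <= Rabs (cos (u - w)).
Proof.
  intros Hw. set (c := Rabs (sin w) / 3).
  destruct (Rle_dec c (Rabs (cos u))) as [|Hu]; [now left|right].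
  apply Rnot_lt_le. intros Hv. apply Rnot_le_lt in Hu.
  rewrite cos_minus in Hv.
  assert (Hsw : 0 < Rabs (sin w)) by (apply Rabs_pos_lt; exact Hw).
  assert (Hsw1 : Rabs (sin w) <= 1) by (apply Rabs_le, SIN_bound).
  assert (Hcw1 : Rabs (cos w) <= 1) by (apply Rabs_le, COS_bound).
  assert (A1 : Rabs (cos u * cos w) < c)
    by (rewrite Rabs_mult; pose proof (Rabs_pos (cos u)); pose proof (Rabs_pos (cos w)); nra).
  assert (A3 : Rabs (sin u) * Rabs (sin w) < 2 * c).
  { rewrite <- Rabs_mult.
    replace (sin u * sin w) with ((cos u * cos w + sin u * sin w) + - (cos u * cos w)) by ring.
    eapply Rle_lt_trans; [apply Rabs_triang|]. rewrite Rabs_Ropp. lra. }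
  assert (Hb : Rabs (sin u) < 2 / 3) by (unfold c in A3; nra).
  assert (Ha : Rabs (cos u) < 1 / 3) by (unfold c in Hu; lra).
  pose proof (sin2_cos2 u) as H. rewrite (Rsqr_abs (sin u)), (Rsqr_abs (cos u)) in H. unfold Rsqr in H.
  pose proof (Rabs_pos (sin u)). pose proof (Rabs_pos (cos u)). nra.
Qed.

Lemma pow_even_sub1_multiple q k : exists m : Z, INR q ^ (2 * k) - 1 = IZR m * (INR q ^ 2 - 1).
Proof.
  induction k as [|k [m Hm]]; [exists 0%Z; simpl; ring|].
  exists (Z.of_nat (q * q) * m + 1)%Z.
  rewrite plus_IZR, mult_IZR, <- INR_IZR_INZ, mult_INR.
  replace (2 * S k)%nat with (2 + 2 * k)%nat by lia. rewrite pow_add.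
  replace (INR q ^ 2 * INR q ^ (2 * k) - 1) with (INR q ^ 2 * (INR q ^ (2 * k) - 1) + (INR q ^ 2 - 1)) by ring.
  rewrite Hm. simpl. ring.
Qed.

Lemma Rabs_cos_IZR_mul_PI (z : Z) : Rabs (cos (IZR z * PI)) = 1.
Proof.
  pose proof (sin2_cos2 (IZR z * PI)) as H.
  rewrite sin_eq_0_1 in H by (exists z; reflexivity). unfold Rsqr in H.
  rewrite <- (Rabs_R1). apply Rsqr_eq_abs_0. unfold Rsqr. lra.
Qed.

(* [phase q t k 0] and [phase q t k 1] are [cos u] and [cos (u - (q^2 - 1) t)] with
   [u = (q^(2k) - 1) t]; unless [sin ((q^2 - 1) t) = 0], one of them is large,
   and otherwise [u] is a multiple of [PI]. *)
Lemma phase_lower_bound q t : exists c, 0 < c /\ forall k, (3 <= k)%nat ->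
  exists n0, admissible k n0 /\ c <= Rabs (phase q t k n0).
Proof.
  set (w := (INR q ^ 2 - 1) * t).
  destruct (Req_dec (sin w) 0) as [Hs|Hs].
  - apply sin_eq_0_0 in Hs as [z Hz]. exists 1. split; [lra|]. intros k Hk.
    exists 0%nat. split; [left; split; lia|]. unfold phase.
    destruct (pow_even_sub1_multiple q k) as [m Hm].
    replace (INR q ^ (2 * k) * t - INR q ^ (2 * 0) * t) with ((INR q ^ (2 * k) - 1) * t) by (simpl; ring).
    rewrite Hm, Rmult_assoc. fold w. rewrite Hz, <- Rmult_assoc, <- mult_IZR, Rabs_cos_IZR_mul_PI. lra.
  - exists (Rabs (sin w) / 3). split; [apply Rdiv_lt_0_compat; [apply Rabs_pos_lt; auto|lra]|].
    intros k Hk. set (u := INR q ^ (2 * k) * t - INR q ^ (2 * 0) * t).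
    destruct (cos_or_shifted_cos_large u w Hs) as [Hu|Hv].
    + exists 0%nat. split; [left; split; lia|exact Hu].
    + exists 1%nat. split; [right; split; lia|].
      unfold phase. replace (INR q ^ (2 * k) * t - INR q ^ (2 * 1) * t) with (u - w) by (unfold u, w; simpl; ring).
      exact Hv.
Qed.

Lemma Pdens_fourier_coef_approx q s t K (J : nat) : (2 <= q)%nat -> s < 2 ->
  Rabs (RInt (fun x => Pdens q s x t * cos (INR J * x)) 0 PI
        - RInt (fun x => Pdens_trunc q s t K x * cos (INR J * x)) 0 PI)
   <= PI * (Nconst q s ^ 2 * (4 * series_bound q s ^ 2 * ratio q s ^ S K)).
Proof.
  intros Hq Hs.
  assert (HP : ex_RInt (fun x => Pdens q s x t * cos (INR J * x)) 0 PI)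
    by (apply ex_RInt_continuity, continuity_mult; [apply Pdens_continuous|apply continuity_cos_mul]; auto).
  assert (HK : ex_RInt (fun x => Pdens_trunc q s t K x * cos (INR J * x)) 0 PI)
    by (eexists; apply is_RInt_Pdens_trunc_cos).
  assert (E : RInt (fun x => Pdens q s x t * cos (INR J * x) - Pdens_trunc q s t K x * cos (INR J * x)) 0 PI
    = RInt (fun x => Pdens q s x t * cos (INR J * x)) 0 PI
      - RInt (fun x => Pdens_trunc q s t K x * cos (INR J * x)) 0 PI)
    by exact (RInt_minus _ _ 0 PI HP HK).
  rewrite <- E. replace PI with (PI - 0) at 2 by ring.
  apply abs_RInt_le_const; [pose proof PI_RGT_0; lra|apply (ex_RInt_minus _ _ 0 PI HP HK)|].
  intros x _.
  rewrite <- Rmult_minus_distr_r, Rabs_mult.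
  pose proof (Pdens_trunc_error q s t Hq Hs K x). pose proof (Rabs_le _ 1 (COS_bound (INR J * x))).
  pose proof (Rabs_pos (Pdens q s x t - Pdens_trunc q s t K x)). pose proof (Rabs_pos (cos (INR J * x))). nra.
Qed.

Lemma Pdens_trunc_fourier_coef_ge q s t K k n0 c : (2 <= q)%nat -> s < 2 ->
  admissible k n0 -> (k <= K)%nat -> 0 <= c -> c <= Rabs (phase q t k n0) ->
  PI / 2 * Nconst q s ^ 2 * ratio q s ^ k * ratio q s * c
    <= Rabs (RInt (fun x => Pdens_trunc q s t K x * cos (INR (q ^ k + q ^ n0) * x)) 0 PI).
Proof.
  intros Hq Hs Hadm HK Hc Hph. pose proof PI_RGT_0 as HPI.
  pose proof (ratio_bounds q s Hq Hs) as Hr. set (r := ratio q s) in *.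
  pose proof (Nconst_sq_pos q s Hq Hs) as HN. set (N2 := Nconst q s ^ 2) in *.
  rewrite Pdens_trunc_fourier_coef by auto. fold r N2.
  assert (Hrk : 0 < r ^ k) by (apply pow_lt; lra).
  assert (Hrn0 : r <= r ^ n0) by (destruct Hadm as [[-> _]|[-> _]]; simpl; lra).
  assert (Hpos : 0 < PI / 2 * N2 * (r ^ k * r ^ n0))
    by (pose proof (pow_lt r n0 ltac:(lra));
        apply Rmult_lt_0_compat; [apply Rmult_lt_0_compat|apply Rmult_lt_0_compat]; lra).
  replace (- (PI / 2) * N2 * (r ^ k * r ^ n0) * phase q t k n0)
    with (- (PI / 2 * N2 * (r ^ k * r ^ n0)) * phase q t k n0) by ring.
  rewrite Rabs_mult, Rabs_Ropp, (Rabs_pos_eq (PI / 2 * N2 * _)) by lra.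
  replace (PI / 2 * N2 * r ^ k * r * c) with (PI / 2 * N2 * (r ^ k * r) * c) by ring.
  apply Rmult_le_compat; try lra.
  - left. apply Rmult_lt_0_compat; [apply Rmult_lt_0_compat|apply Rmult_lt_0_compat]; lra.
  - apply Rmult_le_compat_l; [apply Rmult_le_pos; lra|]. apply Rmult_le_compat_l; lra.
Qed.

Lemma Pdens_trunc_error_small q s c : (2 <= q)%nat -> s < 2 -> 0 < c -> exists L, forall k,
  PI * (Nconst q s ^ 2 * (4 * series_bound q s ^ 2 * ratio q s ^ S (k + L)))
    <= PI / 4 * Nconst q s ^ 2 * ratio q s ^ k * ratio q s * c.
Proof.
  intros Hq Hs Hc. pose proof PI_RGT_0 as HPI.
  pose proof (ratio_bounds q s Hq Hs) as Hr. set (r := ratio q s) in *.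
  pose proof (Nconst_sq_pos q s Hq Hs) as HN. set (N2 := Nconst q s ^ 2) in *.
  pose proof (series_bound_ge1 q s Hq Hs) as HSb. set (Sb := series_bound q s) in *.
  assert (Hsb2 : 0 < Sb ^ 2) by (apply pow_lt; lra).
  assert (Hy : 0 < c / (16 * Sb ^ 2)) by (apply Rdiv_lt_0_compat; lra).
  destruct (pow_lt_1_zero r ltac:(rewrite Rabs_pos_eq; lra) _ Hy) as [L HL].
  specialize (HL L (Nat.le_refl L)). rewrite Rabs_pos_eq in HL by (apply pow_le; lra).
  exists L. intros k. assert (Hrk : 0 < r ^ k) by (apply pow_lt; lra).
  replace (S (k + L)) with (k + 1 + L)%nat by lia. rewrite !pow_add, pow_1.
  assert (4 * Sb ^ 2 * r ^ L <= c / 4).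
  { replace (c / 4) with (4 * Sb ^ 2 * (c / (16 * Sb ^ 2))) by (field; lra).
    apply Rmult_le_compat_l; lra. }
  assert (0 <= PI * N2 * r ^ k * r)
    by (left; apply Rmult_lt_0_compat; [apply Rmult_lt_0_compat; [apply Rmult_lt_0_compat|]|]; lra).
  replace (PI * (N2 * (4 * Sb ^ 2 * (r ^ k * r * r ^ L))))
    with ((PI * N2 * r ^ k * r) * (4 * Sb ^ 2 * r ^ L)) by ring.
  replace (PI / 4 * N2 * r ^ k * r * c) with ((PI * N2 * r ^ k * r) * (c / 4)) by field.
  apply Rmult_le_compat_l; lra.
Qed.

(* The coefficient at [J = q^k + q^n0] is, up to the tail of the series, the single
   resonant term [-(PI / 2) N^2 ratio^(k + n0) phase]. *)
Lemma Pdens_fourier_coef_lower q s t : (2 <= q)%nat -> s < 2 ->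
  exists c0, 0 < c0 /\ forall k, (3 <= k)%nat -> exists J : nat,
    INR q ^ k <= INR J /\ c0 * ratio q s ^ k <= Rabs (RInt (fun x => Pdens q s x t * cos (INR J * x)) 0 PI).
Proof.
  intros Hq Hs. pose proof (INR_gt1 q Hq) as HQ. pose proof PI_RGT_0 as HPI.
  pose proof (ratio_bounds q s Hq Hs) as Hr. pose proof (Nconst_sq_pos q s Hq Hs) as HN.
  destruct (phase_lower_bound q t) as [c [Hc Hphase]].
  destruct (Pdens_trunc_error_small q s c Hq Hs Hc) as [L Htail].
  exists (PI / 4 * Nconst q s ^ 2 * ratio q s * c).
  split; [apply Rmult_lt_0_compat; [apply Rmult_lt_0_compat; [apply Rmult_lt_0_compat|]|]; lra|].
  intros k Hk. destruct (Hphase k Hk) as [n0 [Hadm Hph]].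
  exists (q ^ k + q ^ n0)%nat. split.
  { rewrite plus_INR, !pow_INR. pose proof (pow_lt (INR q) n0 ltac:(lra)). lra. }
  pose proof (Pdens_trunc_fourier_coef_ge q s t (k + L) k n0 c Hq Hs Hadm ltac:(lia) ltac:(lra) Hph) as HIK.
  pose proof (Pdens_fourier_coef_approx q s t (k + L) (q ^ k + q ^ n0) Hq Hs) as Happrox.
  specialize (Htail k).
  set (I := RInt (fun x => Pdens q s x t * cos (INR (q ^ k + q ^ n0) * x)) 0 PI) in *.
  set (IK := RInt _ 0 PI) in HIK, Happrox.
  assert (Rabs IK <= Rabs I + Rabs (I - IK)).
  { replace IK with (I - (I - IK)) at 1 by ring. eapply Rle_trans; [apply Rabs_triang|]. rewrite Rabs_Ropp. lra. }
  replace (PI / 4 * Nconst q s ^ 2 * ratio q s * c * ratio q s ^ k)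
    with (PI / 4 * Nconst q s ^ 2 * ratio q s ^ k * ratio q s * c) by ring.
  lra.
Qed.

(** * Box-counting dimension *)

Lemma pow_bracket Q X : 2 <= Q -> 1 < X -> exists k, (1 <= k)%nat /\ Q ^ (k - 1) < X /\ X <= Q ^ k.
Proof.
  intros HQ HX.
  assert (Hlin : forall k, INR k + 1 <= Q ^ k).
  { induction k; [simpl; lra|]. rewrite S_INR. simpl. pose proof (pos_INR k). nra. }
  assert (Hn : forall m, X <= Q ^ m -> exists k, (1 <= k)%nat /\ Q ^ (k - 1) < X /\ X <= Q ^ k).
  { induction m as [|m IH]; intros Hm; [simpl in Hm; lra|].
    destruct (Rle_dec X (Q ^ m)) as [H|H]; [apply IH; auto|].
    exists (S m). split; [lia|]. simpl (S m - 1)%nat. rewrite Nat.sub_0_r. lra. }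
  apply (Hn (Z.to_nat (up X))). destruct (archimed X) as [A _].
  pose proof (Hlin (Z.to_nat (up X))) as Hup. rewrite INR_IZR_INZ, Z2Nat.id in Hup by (apply le_IZR; lra). lra.
Qed.

Lemma Rpower_Rinv d a : 0 < d -> Rpower (/ d) a = Rpower d (- a).
Proof. intros Hd. unfold Rpower. rewrite ln_Rinv by auto. f_equal. ring. Qed.

Lemma Rpower_le_neg a b e : 0 < a <= b -> e < 0 -> Rpower b e <= Rpower a e.
Proof.
  intros Hab He. replace e with (- (- e)) by ring. rewrite (Rpower_Ropp b (- e)), (Rpower_Ropp a (- e)).
  apply Rinv_le_contravar; [apply Rpower_pos|]. apply Rle_Rpower_l; lra.
Qed.

Lemma ratio_pow_ge q s k d : (2 <= q)%nat -> s < 2 -> 0 < d -> (1 <= k)%nat -> INR q ^ (k - 1) < PI / d ->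
  Rpower (INR q * PI) (s - 2) * Rpower d (2 - s) <= ratio q s ^ k.
Proof.
  intros Hq Hs Hd Hk Hbr. pose proof (INR_gt1 q Hq). pose proof PI_RGT_0.
  rewrite ratio_pow by auto.
  assert (HQk : INR q ^ k <= INR q * (PI / d)).
  { replace k with (S (k - 1)) at 1 by lia. simpl. apply Rmult_le_compat_l; lra. }
  eapply Rle_trans; [|apply Rpower_le_neg; [split; [apply pow_lt; lra|exact HQk]|lra]].
  replace (INR q * (PI / d)) with ((INR q * PI) * / d) by (field; lra).
  rewrite <- (Rpower_mult_distr (INR q * PI) (/ d)) by (try apply Rinv_0_lt_compat; nra).
  rewrite Rpower_Rinv by auto. replace (- (s - 2)) with (2 - s) by ring. lra.
Qed.

Lemma pow_bracket_ge3 q d : (2 <= q)%nat -> 0 < d < PI / (INR q * INR q) ->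
  exists k, (3 <= k)%nat /\ INR q ^ (k - 1) < PI / d /\ PI / d <= INR q ^ k.
Proof.
  intros Hq Hd. pose proof PI_RGT_0 as HPI.
  assert (HQ : 2 <= INR q) by (apply le_INR in Hq; simpl in Hq; lra).
  assert (HX : INR q * INR q < PI / d).
  { apply Rmult_lt_reg_r with (d / (INR q * INR q)); [apply Rdiv_lt_0_compat; nra|].
    replace (INR q * INR q * (d / (INR q * INR q))) with d by (field; lra).
    replace (PI / d * (d / (INR q * INR q))) with (PI / (INR q * INR q)) by (field; nra). lra. }
  destruct (pow_bracket (INR q) (PI / d) HQ ltac:(nra)) as [k [Hk1 [Hk2 Hk3]]].
  exists k. split; [|split; assumption].
  destruct (le_lt_dec 3 k) as [|Hlt]; [assumption|exfalso].
  assert (Hle : INR q ^ k <= INR q ^ 2) by (apply Rle_pow; lra || lia). simpl in Hle. lra.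
Qed.

Lemma count_lower_from_power_bound A B s d n : 0 < A -> 0 < B -> 1 < s -> 0 < d ->
  Rpower d (s - 1) <= A / (8 * B) -> A * Rpower d (2 - s) <= d * d * n + 4 * d * B ->
  A / 2 * Rpower (/ d) s <= n.
Proof.
  intros HA HB Hs Hd Hds Hbound.
  set (Z2 := Rpower d (2 - s)) in *. assert (HZ : 0 < Z2) by apply Rpower_pos.
  assert (HdZ : d = Rpower d (s - 1) * Z2).
  { unfold Z2. rewrite <- Rpower_plus. replace (s - 1 + (2 - s)) with 1 by ring. rewrite Rpower_1; lra. }
  assert (Herr : 4 * d * B <= A / 2 * Z2).
  { rewrite HdZ. replace (A / 2 * Z2) with (4 * (A / (8 * B) * Z2) * B) by (field; lra).
    apply Rmult_le_compat_r; [lra|]. apply Rmult_le_compat_l; [lra|]. apply Rmult_le_compat_r; lra. }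
  assert (HsZ : Rpower (/ d) s * (d * d) = Z2).
  { unfold Z2. rewrite Rpower_Rinv by lra.
    replace (d * d) with (Rpower d (INR 2)) by (rewrite Rpower_pow by lra; simpl; ring).
    rewrite <- Rpower_plus. f_equal. simpl. ring. }
  apply Rmult_le_reg_r with (d * d); [nra|].
  rewrite Rmult_assoc, HsZ. lra.
Qed.

(* For [s > 1] the Fourier coefficient of size [d^(2 - s)] at frequency [~ PI / d]
   beats the error [4 d B] of [fourier_coef_boxes]. *)
Lemma boxes_lower_gt1 q s t : (2 <= q)%nat -> 1 < s < 2 -> exists c d1, 0 < c /\ 0 < d1 /\
  forall d n, 0 < d < d1 -> has_card (box_meets (graph_0pi (fun x => Pdens q s x t)) d) n ->
    c * Rpower (/ d) s <= INR n.
Proof.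
  intros Hq Hs. pose proof (INR_gt1 q Hq) as HQ1. pose proof PI_RGT_0 as HPI. pose proof PI2_3_2 as HPI3.
  destruct (Pdens_fourier_coef_lower q s t Hq ltac:(lra)) as [c0 [Hc0 Hcoef]].
  set (B := 2 * Nconst q s ^ 2 * series_bound q s ^ 2).
  assert (HB : 0 < B)
    by (pose proof (Nconst_sq_pos q s Hq ltac:(lra)); pose proof (series_bound_ge1 q s Hq ltac:(lra));
        unfold B; apply Rmult_lt_0_compat; [lra|apply pow_lt; lra]).
  set (A := c0 * Rpower (INR q * PI) (s - 2)).
  assert (HA : 0 < A) by (apply Rmult_lt_0_compat; [lra|apply Rpower_pos]).
  set (a := A / (8 * B)).
  assert (Ha : 0 < a) by (unfold a; apply Rdiv_lt_0_compat; lra).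
  set (d1 := Rmin (Rmin 1 (PI / (INR q * INR q))) (Rpower a (/ (s - 1)))).
  assert (Hd1 : d1 <= 1 /\ d1 <= PI / (INR q * INR q) /\ d1 <= Rpower a (/ (s - 1))).
  { unfold d1. pose proof (Rmin_l 1 (PI / (INR q * INR q))). pose proof (Rmin_r 1 (PI / (INR q * INR q))).
    pose proof (Rmin_l (Rmin 1 (PI / (INR q * INR q))) (Rpower a (/ (s - 1)))).
    pose proof (Rmin_r (Rmin 1 (PI / (INR q * INR q))) (Rpower a (/ (s - 1)))). lra. }
  exists (A / 2), d1. split; [lra|]. split.
  { unfold d1. apply Rmin_glb_lt; [apply Rmin_glb_lt; [lra|apply Rdiv_lt_0_compat; nra]|apply Rpower_pos]. }
  intros d n [Hd Hdd1] Hn.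
  destruct (pow_bracket_ge3 q d Hq ltac:(lra)) as [k [Hk [Hk2 Hk3]]].
  destruct (Hcoef k Hk) as [J [HJ HIJ]].
  pose proof (fourier_coef_boxes (fun x => Pdens q s x t) B d n (INR J) (Pdens_continuous q s t Hq ltac:(lra))
    (fun x => Rabs_Pdens_le q s t Hq ltac:(lra) x) ltac:(lra) ltac:(lra) Hn) as Hbox.
  pose proof (ratio_pow_ge q s k d Hq ltac:(lra) Hd ltac:(lia) Hk2) as Hratio.
  apply (count_lower_from_power_bound A B s d (INR n)); try lra.
  - replace (A / (8 * B)) with (Rpower (Rpower a (/ (s - 1))) (s - 1))
      by (rewrite Rpower_mult, Rinv_l, Rpower_1 by lra; reflexivity).
    apply Rle_Rpower_l; lra.
  - eapply Rle_trans; [|exact Hbox]. eapply Rle_trans; [|exact HIJ].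
    unfold A. rewrite Rmult_assoc. apply Rmult_le_compat_l; lra.
Qed.

Lemma boxes_ge_inv f d n : continuity f -> 0 < d < 1 ->
  has_card (box_meets (graph_0pi f) d) n -> / d <= INR n.
Proof.
  intros Hc Hd Hn. pose proof PI2_3_2.
  destruct (grid_count d Hd) as [M [HM1 HM2]].
  destruct (boxes_lower_bound f d d n M Hc ltac:(lra) ltac:(lra) HM1 Hn) as [Hlow _].
  apply Rmult_le_reg_r with d; [lra|]. rewrite Rinv_l by lra.
  assert ((INR M + 1) * d <= INR n * d) by (apply Rmult_le_compat_r; lra). nra.
Qed.

Lemma boxes_lower_power q s t : (2 <= q)%nat -> 0 < s < 2 -> exists c d1, 0 < c /\ 0 < d1 /\
  forall d n, 0 < d < d1 -> has_card (box_meets (graph_0pi (fun x => Pdens q s x t)) d) n ->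
    c * Rpower (/ d) (Rmax s 1) <= INR n.
Proof.
  intros Hq Hs. destruct (Rle_dec s 1) as [Hs1|Hs1].
  - rewrite Rmax_right by lra. exists 1, 1. split; [lra|]. split; [lra|].
    intros d n Hd Hn. rewrite Rpower_1, Rmult_1_l by (apply Rinv_0_lt_compat; lra).
    apply (boxes_ge_inv _ d n (Pdens_continuous q s t Hq ltac:(lra)) Hd Hn).
  - rewrite Rmax_left by lra. apply boxes_lower_gt1; auto; lra.
Qed.

Lemma boxes_upper_power q s t eps : (2 <= q)%nat -> 0 < s < 2 -> 0 < eps ->
  exists CU eta, 0 < CU /\ 0 <= eta <= eps / 2 /\
  forall d n, 0 < d < 1 -> has_card (box_meets (graph_0pi (fun x => Pdens q s x t)) d) n ->
     INR n <= CU * Rpower (/ d) (Rmax s 1 + eta).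
Proof.
  intros Hq Hs Heps. set (D := Rmax s 1).
  assert (HD : s <= D /\ 1 <= D /\ D < 2)
    by (unfold D; repeat split; [apply Rmax_l|apply Rmax_r|apply Rmax_lub_lt; lra]).
  set (eta := Rmin (eps / 2) ((2 - D) / 2)).
  assert (Heta : 0 < eta <= eps / 2 /\ eta <= (2 - D) / 2)
    by (unfold eta; repeat split; [apply Rmin_glb_lt; lra|apply Rmin_l|apply Rmin_r]).
  set (th := 2 - D - eta).
  assert (Hth : 0 < th <= 1) by (unfold th; lra).
  assert (Hrho : holder_ratio q s th < 1) by (apply holder_ratio_lt1; auto; unfold th; lra).
  pose proof (holder_const_nonneg q s Hq ltac:(lra) th Hrho) as HHC.
  set (CU := (PI + 2) * (2 * holder_const q s th + 3)).
  pose proof PI_RGT_0.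
  exists CU, eta. split; [unfold CU; apply Rmult_lt_0_compat; lra|]. split; [lra|].
  intros d n Hd Hn.
  assert (Hid : 1 < / d) by (rewrite <- Rinv_1; apply Rinv_lt_contravar; lra).
  set (w := holder_const q s th * Rpower d th).
  assert (Hw : 0 <= w) by (unfold w; apply Rmult_le_pos; auto; left; apply Rpower_pos).
  assert (Hcount : INR n <= (PI / d + 2) * (2 * w / d + 3)).
  { apply (boxes_upper_bound (fun x => Pdens q s x t) d w n ltac:(lra) Hw); auto.
    intros x y _ _ Hxy. apply Pdens_holder; auto; lra. }
  assert (E1 : w / d = holder_const q s th * Rpower (/ d) (1 - th)).
  { unfold w. rewrite Rpower_Rinv by lra.
    replace (Rpower d th) with (Rpower d (- (1 - th)) * d); [field; lra|].
    rewrite <- (Rpower_1 d) at 2 by lra. rewrite <- Rpower_plus. f_equal. ring. }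
  assert (G1 : 1 <= Rpower (/ d) (1 - th)) by (apply Rpower_ge1; lra).
  assert (A1 : PI / d + 2 <= (PI + 2) * / d) by (unfold Rdiv; nra).
  assert (A2 : 2 * w / d + 3 <= (2 * holder_const q s th + 3) * Rpower (/ d) (1 - th)).
  { replace (2 * w / d) with (2 * (w / d)) by (field; lra). rewrite E1. nra. }
  assert (E2 : Rpower (/ d) (D + eta) = / d * Rpower (/ d) (1 - th)).
  { rewrite <- (Rpower_1 (/ d)) at 2 by lra. rewrite <- Rpower_plus. f_equal. unfold th. ring. }
  fold D. rewrite E2. eapply Rle_trans; [apply Hcount|].
  replace (CU * (/ d * Rpower (/ d) (1 - th)))
    with (((PI + 2) * / d) * ((2 * holder_const q s th + 3) * Rpower (/ d) (1 - th))) by (unfold CU; ring).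
  apply Rmult_le_compat; auto.
  - apply Rplus_le_le_0_compat; [|lra]. unfold Rdiv. apply Rmult_le_pos; lra.
  - apply Rplus_le_le_0_compat; [|lra]. unfold Rdiv. apply Rmult_le_pos; [lra|]. left; apply Rinv_0_lt_compat; lra.
Qed.

Lemma ln_le_compat x y : 0 < x -> x <= y -> ln x <= ln y.
Proof. intros Hx [Hxy| ->]; [left; apply ln_increasing|]; lra. Qed.

Lemma ln_ratio_close D eps eta clo CU d (n : nat) : 0 < d < 1 -> 0 < clo -> 0 < CU ->
  0 <= eta <= eps / 2 -> 0 < eps ->
  clo * Rpower (/ d) D <= INR n -> INR n <= CU * Rpower (/ d) (D + eta) ->
  2 * (Rabs (ln CU) + Rabs (ln clo)) / eps + 1 < ln (/ d) ->
  Rabs (ln (INR n) / ln (1 / d) - D) < eps.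
Proof.
  intros Hd Hclo HCU Heta Heps Hlo Hup HL.
  unfold Rdiv at 2. rewrite Rmult_1_l. set (L := ln (/ d)) in *.
  set (T := Rabs (ln CU) + Rabs (ln clo)) in *.
  pose proof (Rle_abs (ln CU)). pose proof (Rle_abs (- ln clo)) as Hclo'. rewrite Rabs_Ropp in Hclo'.
  pose proof (Rabs_pos (ln CU)). pose proof (Rabs_pos (ln clo)).
  assert (HTe : 0 <= 2 * T / eps) by (apply Rdiv_le_0_compat; unfold T; lra).
  assert (HL0 : 0 < L) by lra.
  assert (HTL : 2 * T < eps * L).
  { assert (E : 2 * T = eps * (2 * T / eps)) by (field; lra).
    rewrite E. apply Rmult_lt_compat_l; lra. }
  assert (Hpos : 0 < clo * Rpower (/ d) D) by (apply Rmult_lt_0_compat; [lra|apply Rpower_pos]).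
  assert (Hn : 0 < INR n) by lra.
  apply ln_le_compat in Hlo; [|exact Hpos]. apply ln_le_compat in Hup; [|exact Hn].
  rewrite ln_mult, ln_Rpower in Hlo, Hup by (auto; apply Rpower_pos). fold L in Hlo, Hup.
  replace (ln (INR n) / L - D) with ((ln (INR n) - D * L) / L) by (field; lra).
  rewrite Rabs_div by lra. rewrite (Rabs_pos_eq L) by lra.
  apply Rmult_lt_reg_r with L; [lra|]. unfold Rdiv. rewrite Rmult_assoc, Rinv_l, Rmult_1_r by lra.
  assert (eta * L <= eps / 2 * L) by (apply Rmult_le_compat_r; lra).
  unfold T in HTL. apply Rabs_def1; lra.
Qed.

Theorem theorem1 (q : nat) (s : R) :
  (2 <= q)%nat -> 0 < s < 2 ->
  forall t : R, box_dim_is (graphP q s t) (Rmax s 1).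
Proof.
  intros Hq Hs t.
  change (graphP q s t) with (graph_0pi (fun x => Pdens q s x t)).
  split.
  - intros d Hd. set (th := (2 - s) / 2).
    assert (Hrho : holder_ratio q s th < 1) by (apply holder_ratio_lt1; auto; unfold th; lra).
    apply (boxes_finite _ d (holder_const q s th * Rpower d th)); auto.
    + apply Rmult_le_pos; [apply holder_const_nonneg; auto; lra|left; apply Rpower_pos].
    + intros x y _ _ Hxy. apply Pdens_holder; auto; unfold th; lra.
  - intros eps Heps.
    destruct (boxes_upper_power q s t eps Hq Hs Heps) as [CU [eta [HCU [Heta Hup]]]].
    destruct (boxes_lower_power q s t Hq Hs) as [clo [d1 [Hclo [Hd1 Hlo]]]].
    set (T := 2 * (Rabs (ln CU) + Rabs (ln clo)) / eps + 1).
    exists (Rmin (Rmin 1 d1) (exp (- T))). split.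
    { apply Rmin_glb_lt; [apply Rmin_glb_lt; lra|apply exp_pos]. }
    intros d n [Hd Hd0] Hn.
    pose proof (Rmin_l (Rmin 1 d1) (exp (- T))). pose proof (Rmin_r (Rmin 1 d1) (exp (- T))).
    pose proof (Rmin_l 1 d1). pose proof (Rmin_r 1 d1).
    apply (ln_ratio_close _ eps eta clo CU d n); try lra; [apply Hlo|apply Hup|]; auto; try lra.
    fold T. rewrite ln_Rinv by lra.
    assert (ln d < - T) by (rewrite <- (ln_exp (- T)); apply ln_increasing; lra).
    lra.
Qed.
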